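(* Let $\mathcal{T}^*$ be the category of rooted simplicial trees and rooted metrically proper homotopy classes of rooted continuous metrically proper maps, and let \textbf{Tower-Set} be the category of inverse sequences of sets. Define $\eta:\mathcal{T}^*\to\textbf{Tower-Set}$ as follows. For a rooted simplicial tree $(T,v)$, $\eta(T,v)=(C_n,p_n)_{n\ge 1}$, where $C_n$ is the set of vertices at distance $n$ from $v$ and $p_n:C_{n+1}\to C_n$ sends a vertex $P$ to the unique adjacent vertex of $P$ at distance $n$ from $v$. For a rooted continuous metrically proper map $f:(T,v)\to(T',w)$, choose a strictly increasing sequence of integers $(t_n)$ with $f^{-1}(B(w,n))\subset B(v,t_n)$ for all $n$; for $c\in C_{t_n}$ there is a unique vertex $c'\in C'_n$ (vertices of $T'$ at distance $n$ from $w$) with $f(T_c)\subset T'_{c'}$, and one sets $\Phi_f(n)=t_n$, $f_n(c)=c'$; then $\eta([f])$ is the class of the morphism $(f_n,\Phi_f)$ (this class does not depend on the choices nor on the representative of the homotopy class of $f$). Then $\eta$ is an equivalence of categories.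
   Context: A rooted simplicial tree $(T,v)$ is (the geometric realization of) a simplicial tree, each edge isometric to $[0,1]$, with the path metric, and with a distinguished vertex $v$ (the root). $B(x,r)=\{y: d(x,y)<r\}$. For $c\in T$, $T_c=\{x\in T: c\in[v,x]\}$, where $[v,x]$ is the unique arc from $v$ to $x$. A map $f$ between metric spaces is metrically proper if preimages of bounded sets are bounded; it is rooted if $f(v)=w$. A rooted metrically proper homotopy between rooted continuous metrically proper maps $f,f':(T,v)\to(T',w)$ is a continuous $H:T\times[0,1]\to T'$ with $H(\cdot,0)=f$, $H(\cdot,1)=f'$, $H(v,s)=w$ for all $s$, and such that for every $M>0$ there is $N>0$ with $H^{-1}(B(w,M))\subset B(v,N)\times[0,1]$. An inverse sequence of sets $(X_n,p_n)_{n\ge1}$ consists of sets $X_n$ and maps $p_n:X_{n+1}\to X_n$; write $p_{nm}=p_n\circ\cdots\circ p_{m-1}:X_m\to X_n$ for $n<m$, $p_{nn}=\mathrm{id}$. A morphism $(f_n,\Phi):(X_n,p_n)\to(Y_n,q_n)$ consists of a function $\Phi:\mathbb{N}\to\mathbb{N}$ and maps $f_n:X_{\Phi(n)}\to Y_n$ such that for all $n'>n$ there is $m\ge\Phi(n),\Phi(n')$ with $f_n\circ p_{\Phi(n)m}=q_{nn'}\circ f_{n'}\circ p_{\Phi(n')m}$. Two morphisms $(f_n,\Phi),(g_n,\Psi)$ are equivalent if each $n$ admits $m\ge\Phi(n),\Psi(n)$ with $f_n\circ p_{\Phi(n)m}=g_n\circ p_{\Psi(n)m}$. \textbf{Tower-Set}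 has inverse sequences of sets as objects and equivalence classes of morphisms as morphisms (composition of $(f_n,\Phi)$ followed by $(g_n,\Psi)$ is $(g_n\circ f_{\Psi(n)},\Phi\circ\Psi)$). *)

From Stdlib Require Import Reals Lra Lia List ClassicalEpsilon.
Import ListNotations.
Open Scope R_scope.

Inductive walk {V : Type} (adj : V -> V -> Prop) (a : V) : V -> nat -> Prop :=
| walk0 : walk adj a a 0
| walkS : forall b c n, walk adj a b n -> adj b c -> walk adj a c (S n).

Definition gdistR {V : Type} (adj : V -> V -> Prop) (a b : V) (n : nat) : Prop :=
  walk adj a b n /\ (forall m, walk adj a b m -> (n <= m)%nat).

Fixpoint chain {V : Type} (adj : V -> V -> Prop) (x : V) (l : list V) : Prop :=
  match l with
  | [] => True
  | y :: l' => adj x y /\ chain adj y l'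
  end.

Definition has_cycle {V : Type} (adj : V -> V -> Prop) : Prop :=
  exists (x0 : V) (l : list V),
    (2 <= length l)%nat /\ NoDup (x0 :: l) /\ chain adj x0 l /\ adj (last l x0) x0.

Record Tree := {
  tV : Type;
  tadj : tV -> tV -> Prop;
  tadj_sym : forall a b, tadj a b -> tadj b a;
  tadj_irr : forall a, ~ tadj a a;
  tconn : forall a b, exists n, walk tadj a b n;
  tacyc : ~ has_cycle tadj
}.

(* graph distance as a function (well specified since trees are connected) *)
Definition gdist (T : Tree) (a b : tV T) : nat :=
  match excluded_middle_informative (exists n, gdistR (tadj T) a b n) with
  | left H => proj1_sig (constructive_indefinite_description _ H)
  | right _ => 0%nat
  end.

(* PV a : the vertex a;  PE a b t : the point at distance t from a on
   the edge [a,b], where b is the child of a (edges oriented away from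
   the root, so that every point has a unique representative). *)
Inductive raw (V : Type) : Type :=
| PV : V -> raw V
| PE : V -> V -> R -> raw V.
Arguments PV {V} _.
Arguments PE {V} _ _ _.

Definition valid (T : Tree) (v : tV T) (x : raw (tV T)) : Prop :=
  match x with
  | PV _ => True
  | PE a b t => tadj T a b /\
                (exists n, gdistR (tadj T) v a n /\ gdistR (tadj T) v b (S n)) /\
                0 < t < 1
  end.

Definition pt (T : Tree) (v : tV T) : Type := {x : raw (tV T) | valid T v x}.

Definition vpt (T : Tree) (v a : tV T) : pt T v := exist _ (PV a) I.

Definition ends {V : Type} (x : raw V) : (V * R) * (V * R) :=
  match x with
  | PV a => ((a, 0), (a, 0))
  | PE a b t => ((a, t), (b, 1 - t))
  end.

Definition leg (T : Tree) (p q : tV T * R) : R :=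
  snd p + INR (gdist T (fst p) (fst q)) + snd q.

Definition via (T : Tree) (x y : raw (tV T)) : R :=
  let (p1, p2) := ends x in
  let (q1, q2) := ends y in
  Rmin (Rmin (leg T p1 q1) (leg T p1 q2)) (Rmin (leg T p2 q1) (leg T p2 q2)).

(* path metric of the geometric realization (edges isometric to [0,1]) *)
Definition rdist (T : Tree) (x y : raw (tV T)) : R :=
  match x, y with
  | PE a b t, PE c d s =>
      if excluded_middle_informative (a = c /\ b = d)
      then Rmin (Rabs (t - s)) (via T x y) else via T x y
  | _, _ => via T x y
  end.

Definition pdist (T : Tree) (v : tV T) (x y : pt T v) : R :=
  rdist T (proj1_sig x) (proj1_sig y).

Definition bounded (T : Tree) (v : tV T) (S : pt T v -> Prop) : Prop :=
  exists (c : pt T v) (r : R), forall y, S y -> pdist T v c y < r.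

Definition RCP (T : Tree) (v : tV T) (T' : Tree) (w : tV T')
  (f : pt T v -> pt T' w) : Prop :=
  (forall x eps, 0 < eps -> exists delta, 0 < delta /\
      forall y, pdist T v x y < delta -> pdist T' w (f x) (f y) < eps) /\
  (forall S, bounded T' w S -> bounded T v (fun x => S (f x))) /\
  proj1_sig (f (vpt T v v)) = PV w.

Definition rmp_homotopic (T : Tree) (v : tV T) (T' : Tree) (w : tV T')
  (f g : pt T v -> pt T' w) : Prop :=
  exists H : pt T v -> R -> pt T' w,
    (forall x, H x 0 = f x) /\
    (forall x, H x 1 = g x) /\
    (forall s, 0 <= s <= 1 -> proj1_sig (H (vpt T v v) s) = PV w) /\
    (forall x s eps, 0 <= s <= 1 -> 0 < eps -> exists delta, 0 < delta /\
       forall y s', 0 <= s' <= 1 -> pdist T v x y < delta -> Rabs (s - s') < delta ->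
         pdist T' w (H x s) (H y s') < eps) /\
    (forall M, 0 < M -> exists N, 0 < N /\
       forall x s, 0 <= s <= 1 -> pdist T' w (vpt T' w w) (H x s) < M ->
         pdist T v (vpt T v v) x < N).

(* c in [v, x]  (c a vertex); for PE a b t the arc [v,x] contains the
   vertices of [v,a] only *)
Definition anc (T : Tree) (v c a : tV T) : Prop :=
  (gdist T v c + gdist T c a)%nat = gdist T v a.

Definition inSub (T : Tree) (v c : tV T) (x : raw (tV T)) : Prop :=
  match x with
  | PV a => anc T v c a
  | PE a _ _ => anc T v c a
  end.

(* Indices are shifted by one: index k here is index k+1 of the paper. *)
Record tower := { tX : nat -> Type; tp : forall n, tX (S n) -> tX n }.

(* bond A n m x y : y = p_{nm}(x)  (only holds when n <= m) *)
Inductive bond (A : tower) (n : nat) : forall m, tX A m -> tX A n -> Prop :=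
| bond_refl : forall x, bond A n n x x
| bond_step : forall m (x : tX A (S m)) y, bond A n m (tp A m x) y -> bond A n (S m) x y.

Record mor (A B : tower) := { mPhi : nat -> nat; mf : forall n, tX A (mPhi n) -> tX B n }.
Arguments mPhi {A B} _ _.
Arguments mf {A B} _ _ _.

Definition IsMor {A B : tower} (f : mor A B) : Prop :=
  forall n n', (n < n')%nat -> exists m, (mPhi f n <= m)%nat /\ (mPhi f n' <= m)%nat /\
    forall (x : tX A m) y1 y2 z,
      bond A (mPhi f n) m x y1 -> bond A (mPhi f n') m x y2 ->
      bond B n n' (mf f n' y2) z -> mf f n y1 = z.

Definition mor_eq {A B : tower} (f g : mor A B) : Prop :=
  forall n, exists m, (mPhi f n <= m)%nat /\ (mPhi g n <= m)%nat /\
    forall (x : tX A m) y1 y2,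
      bond A (mPhi f n) m x y1 -> bond A (mPhi g n) m x y2 -> mf f n y1 = mf g n y2.

Definition mor_id (A : tower) : mor A A :=
  {| mPhi := fun n => n; mf := fun n (x : tX A n) => x |}.

Definition mor_comp {A B C : tower} (f : mor A B) (g : mor B C) : mor A C :=
  {| mPhi := fun n => mPhi f (mPhi g n);
     mf := fun n x => mf g n (mf f (mPhi g n) x) |}.

Definition tower_iso (A B : tower) : Prop :=
  exists (f : mor A B) (g : mor B A), IsMor f /\ IsMor g /\
    mor_eq (mor_comp f g) (mor_id A) /\ mor_eq (mor_comp g f) (mor_id B).

Definition Cset (T : Tree) (v : tV T) (k : nat) : Type :=
  {c : tV T | gdistR (tadj T) v c (S k)}.

Lemma parent_ex (T : Tree) (v : tV T) (k : nat) (c : tV T) :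
  gdistR (tadj T) v c (S (S k)) ->
  exists u, tadj T c u /\ gdistR (tadj T) v u (S k).
Proof.
  intros [Hw Hmin].
  inversion Hw as [|b c' n Hwb Hadj]; subst.
  exists b; split.
  - apply tadj_sym; exact Hadj.
  - split; [exact Hwb|].
    intros m Hm. specialize (Hmin (S m) (walkS _ _ _ _ _ Hm Hadj)). lia.
Qed.

Definition parent (T : Tree) (v : tV T) (k : nat) (c : Cset T v (S k)) : Cset T v k :=
  let H := constructive_indefinite_description _ (parent_ex T v k (proj1_sig c) (proj2_sig c)) in
  exist _ (proj1_sig H) (proj2 (proj2_sig H)).

Definition eta (T : Tree) (v : tV T) : tower :=
  {| tX := Cset T v; tp := parent T v |}.

(* m is a representative of eta([f]) built as in the paper: with
   t_{k+1} = Phi k + 1 strictly increasing, f^{-1}(B(w,k+1)) inside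
   B(v, t_{k+1}), and f(T_c) inside T'_{f_k(c)} for c in C_{t_{k+1}}. *)
Definition IsEtaMor (T : Tree) (v : tV T) (T' : Tree) (w : tV T')
  (f : pt T v -> pt T' w) (m : mor (eta T v) (eta T' w)) : Prop :=
  (forall k, (mPhi m k < mPhi m (S k))%nat) /\
  (forall k x, pdist T' w (vpt T' w w) (f x) < INR (S k) ->
               pdist T v (vpt T v v) x < INR (S (mPhi m k))) /\
  (forall k (c : Cset T v (mPhi m k)) (x : pt T v),
      inSub T v (proj1_sig c) (proj1_sig x) ->
      inSub T' w (proj1_sig (mf m k c)) (proj1_sig (f x))).

From Pilot Require Import Defs.
From Stdlib Require Import Reals Lra Psatz Lia List ClassicalEpsilon Classical ZArith
  Eqdep_dec ProofIrrelevance.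
Import ListNotations.

(* In a rooted tree every vertex [a] of depth [n] has a unique ancestor of each depth [k <= n];
   the geometric realization is then the R-tree whose metric is
   [d(x, y) = h(x) + h(y) - 2 (x|y)], with [h] the height over the root and [(x|y)] the height
   where the arcs [v, x] and [v, y] part.  A rooted proper map [f] sends the subtree [T_c]
   hanging from a deep enough vertex [c] into a single subtree of [T'], because the points of
   [T_c] are joined to [c] by descending arcs whose images stay far from the root; this gives
   [eta f], and the same connectedness argument along a proper homotopy shows that it is a
   homotopy invariant.  Conversely, a morphism of towers, made commutative at the levels of a
   refined index sequence [Psi], is realized by the simplicial map sending a vertex of depth in
   [(Psi n, Psi (n+1)]] to the image of its ancestor of depth [Psi n + 1]; two proper maps with
   the same image under [eta] are joined by the homotopy that slides each [f x] down to the
   branch point of [[w, f x]] and [[w, g x]] and then up to [g x], which stays proper because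
   that branch point is far from the root.  Finally a tower is the tower of ends of the tree
   whose vertices are its elements, plus a root. *)

Open Scope nat_scope.

Lemma least_witness (P : nat -> Prop) :
  (exists n, P n) -> exists n, P n /\ forall m, P m -> n <= m.
Proof.
  intros [n Hn]. revert Hn. induction n as [n IH] using (well_founded_induction lt_wf).
  intros Pn. destruct (classic (exists m, m < n /\ P m)) as [[m [Hm Pm]]|Hno].
  - exact (IH m Hm Pm).
  - exists n; split; auto. intros m Pm. destruct (le_lt_dec n m); auto.
    exfalso; apply Hno; eauto.
Qed.

(* the largest [i <= n] satisfying [P], or [0] if there is none *)
Fixpoint greatest_upto (P : nat -> Prop) (n : nat) : nat :=
  match n with
  | 0 => 0
  | S n' => if excluded_middle_informative (P (S n')) then S n' else greatest_upto P n'
  end.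

Lemma greatest_upto_le P n : greatest_upto P n <= n.
Proof. induction n; simpl; auto. destruct excluded_middle_informative; lia. Qed.

Lemma greatest_upto_spec P n : P 0 -> P (greatest_upto P n).
Proof. induction n; simpl; auto. destruct excluded_middle_informative; auto. Qed.

Lemma greatest_upto_max P n i : i <= n -> P i -> i <= greatest_upto P n.
Proof.
  induction n; simpl; intros Hi Pi; [lia|].
  destruct excluded_middle_informative as [H|H]; [lia|].
  destruct (Nat.eq_dec i (S n)); [subst; contradiction|]. apply IHn; auto; lia.
Qed.

Section Walks.
Variables (V : Type) (adj : V -> V -> Prop).
Hypothesis adj_sym : forall a b, adj a b -> adj b a.

Lemma walk_cons a b c n : adj a b -> walk adj b c n -> walk adj a c (S n).
Proof.
  intros Hab H; induction H.
  - apply walkS with a; [constructor|exact Hab].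
  - eapply walkS; eauto.
Qed.

Lemma walk_app a b c n m : walk adj a b n -> walk adj b c m -> walk adj a c (n + m).
Proof.
  intros H1 H2; induction H2.
  - rewrite Nat.add_0_r; auto.
  - rewrite Nat.add_succ_r. eapply walkS; eauto.
Qed.

Lemma walk_rev a b n : walk adj a b n -> walk adj b a n.
Proof.
  intros H; induction H; [constructor|].
  eapply walk_cons; eauto.
Qed.

End Walks.

Arguments walk_cons {V adj a b c n}.
Arguments walk_app {V adj a b c n m}.
Arguments walk_rev {V adj} adj_sym {a b n}.

Section GraphDistance.
Variable T : Tree.
Notation V := (tV T).
Notation adj := (tadj T).

Lemma walk_edge a b : adj a b -> walk adj a b 1.
Proof. intros; apply walkS with a; [constructor|auto]. Qed.

Lemma gdist_spec a b : gdistR adj a b (gdist T a b).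
Proof.
  unfold gdist. destruct excluded_middle_informative as [H|H].
  - exact (proj2_sig (constructive_indefinite_description _ H)).
  - exfalso; apply H.
    destruct (least_witness _ (tconn T a b)) as [n Hn]. exists n; exact Hn.
Qed.

Lemma gdist_unique a b n : gdistR adj a b n -> gdist T a b = n.
Proof.
  intros [H1 H2]. destruct (gdist_spec a b) as [H3 H4].
  specialize (H2 _ H3); specialize (H4 _ H1); lia.
Qed.

Lemma gdist_walk a b : walk adj a b (gdist T a b).
Proof. apply gdist_spec. Qed.

Lemma gdist_le_walk a b n : walk adj a b n -> gdist T a b <= n.
Proof. intros H; apply (proj2 (gdist_spec a b)); auto. Qed.

Lemma gdist_sym a b : gdist T a b = gdist T b a.
Proof.
  apply Nat.le_antisymm; apply gdist_le_walk; apply (walk_rev (tadj_sym T)); apply gdist_walk.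
Qed.

Lemma gdist_refl a : gdist T a a = 0.
Proof. pose proof (gdist_le_walk a a 0 (walk0 _ _)); lia. Qed.

Lemma gdist_eq0 a b : gdist T a b = 0 -> a = b.
Proof.
  intros H; pose proof (gdist_walk a b) as W; rewrite H in W. inversion W; auto.
Qed.

Lemma gdist_adj a b : adj a b -> gdist T a b = 1.
Proof.
  intros H. pose proof (gdist_le_walk a b 1 (walk_edge a b H)).
  destruct (gdist T a b) eqn:E; [|lia].
  apply gdist_eq0 in E; subst; exfalso; eapply tadj_irr; eauto.
Qed.

End GraphDistance.

Lemma chain_app {V} (adj : V -> V -> Prop) a l1 l2 :
  chain adj a l1 -> chain adj (last l1 a) l2 -> chain adj a (l1 ++ l2).
Proof.
  revert a; induction l1 as [|b l1 IH]; intros a H1 H2; simpl in *; auto.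
  destruct H1 as [H1 H1']. split; auto. apply IH; auto.
  destruct l1 as [|c l1]; auto.
  replace (last (c :: l1) b) with (last (c :: l1) a); auto.
  clear; revert c; induction l1 as [|d l1 IH]; intros c; [reflexivity|apply (IH d)].
Qed.

Lemma last_map_seq {V} (F : nat -> V) l i n d :
  last (l ++ map F (seq i (S n))) d = F (i + n).
Proof.
  revert l i; induction n; intros l i.
  - cbn [seq map]. rewrite last_last. f_equal; lia.
  - change (map F (seq i (S (S n)))) with ([F i] ++ map F (seq (S i) (S n))).
    rewrite app_assoc, IHn. f_equal; lia.
Qed.

Section Depth.
Variables (T : Tree) (v : tV T).
Notation V := (tV T).
Notation adj := (tadj T).

Definition depth (a : V) : nat := gdist T v a.

Lemma depth_spec a : gdistR adj v a (depth a).
Proof. apply gdist_spec. Qed.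

Lemma depth_walk a b n : walk adj a b n -> depth b <= depth a + n.
Proof.
  intros H. unfold depth. pose proof (gdist_le_walk T v b _ (walk_app (gdist_walk T v a) H)). lia.
Qed.

Lemma depth_adj a b : adj a b -> depth b <= S (depth a).
Proof. intros H; pose proof (depth_walk _ _ _ (walk_edge T a b H)); lia. Qed.

Lemma depth_root : depth v = 0.
Proof. apply gdist_refl. Qed.

Lemma depth_eq0 a : depth a = 0 -> a = v.
Proof. intros H; symmetry; apply gdist_eq0; auto. Qed.

Lemma parent_exists a : 0 < depth a -> exists b, adj a b /\ S (depth b) = depth a.
Proof.
  intros Hl. pose proof (gdist_walk T v a) as W. fold (depth a) in W.
  destruct (depth a) as [|n] eqn:E; [lia|].
  inversion W as [|b c n' Wb Hadj]; subst.
  exists b; split; [apply tadj_sym; auto|].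
  pose proof (gdist_le_walk T _ _ _ Wb). fold (depth b) in H. pose proof (depth_adj _ _ Hadj). lia.
Qed.

(* on the root, [parv] is the identity *)
Definition parv (a : V) : V :=
  match excluded_middle_informative (exists b, adj a b /\ S (depth b) = depth a) with
  | left H => proj1_sig (constructive_indefinite_description _ H)
  | right _ => a
  end.

Lemma parv_spec a : 0 < depth a -> adj a (parv a) /\ S (depth (parv a)) = depth a.
Proof.
  intros Hl. unfold parv. destruct excluded_middle_informative as [H|H].
  - exact (proj2_sig (constructive_indefinite_description _ H)).
  - exfalso; apply H, parent_exists; auto.
Qed.

Lemma parv_root a : depth a = 0 -> parv a = a.
Proof.
  intros Hl. unfold parv. destruct excluded_middle_informative as [H|H]; auto.
  exfalso. destruct H as [b [_ H]]. lia.
Qed.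

Lemma depth_parv a : depth (parv a) = depth a - 1.
Proof.
  destruct (depth a) eqn:E.
  - rewrite parv_root; auto; lia.
  - pose proof (parv_spec a); lia.
Qed.

Definition parv_iter (k : nat) (a : V) : V := Nat.iter k parv a.

Lemma depth_parv_iter k a : depth (parv_iter k a) = depth a - k.
Proof.
  induction k; unfold parv_iter in *; simpl; [lia|].
  rewrite depth_parv, IHk; lia.
Qed.

Lemma parv_iter_add p q a : parv_iter (p + q) a = parv_iter p (parv_iter q a).
Proof. unfold parv_iter; apply Nat.iter_add. Qed.

Lemma parv_iter_walk k a : k <= depth a -> walk adj (parv_iter k a) a k.
Proof.
  induction k; intros H; [constructor|].
  change (parv_iter (S k) a) with (parv (parv_iter k a)).
  apply (walk_cons (b := parv_iter k a)); [|apply IHk; lia].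
  apply tadj_sym, parv_spec. rewrite depth_parv_iter; lia.
Qed.

Definition ancestor (k : nat) (a : V) : V := parv_iter (depth a - k) a.

Lemma depth_ancestor k a : k <= depth a -> depth (ancestor k a) = k.
Proof. intros; unfold ancestor; rewrite depth_parv_iter; lia. Qed.

Lemma ancestor_depth a : ancestor (depth a) a = a.
Proof. unfold ancestor; rewrite Nat.sub_diag; reflexivity. Qed.

Lemma ancestor_ancestor k' k a :
  k' <= k -> k <= depth a -> ancestor k' (ancestor k a) = ancestor k' a.
Proof.
  intros H1 H2. unfold ancestor at 1. rewrite (depth_ancestor k a H2). unfold ancestor.
  rewrite <- parv_iter_add. f_equal; lia.
Qed.

Lemma parv_ancestor k a : S k <= depth a -> parv (ancestor (S k) a) = ancestor k a.
Proof.
  intros H. unfold ancestor. change (parv (parv_iter (depth a - S k) a))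
    with (parv_iter (S (depth a - S k)) a). f_equal. lia.
Qed.

Lemma parv_as_ancestor c : 0 < depth c -> parv c = ancestor (depth c - 1) c.
Proof.
  intros H. unfold ancestor. replace (depth c - (depth c - 1)) with 1 by lia. reflexivity.
Qed.

Lemma ancestor_0 a : ancestor 0 a = v.
Proof. apply depth_eq0. apply depth_ancestor; lia. Qed.

Lemma adj_ancestor k a : S k <= depth a -> adj (ancestor k a) (ancestor (S k) a).
Proof.
  intros H. rewrite <- parv_ancestor by auto. apply tadj_sym, parv_spec.
  rewrite depth_ancestor; lia.
Qed.

Definition meet (a b : V) : nat :=
  greatest_upto (fun i => ancestor i a = ancestor i b) (Nat.min (depth a) (depth b)).

Lemma meet_spec a b : ancestor (meet a b) a = ancestor (meet a b) b.
Proof.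
  apply (greatest_upto_spec (fun i => ancestor i a = ancestor i b)). rewrite !ancestor_0; auto.
Qed.

Lemma meet_le a b : meet a b <= depth a /\ meet a b <= depth b.
Proof.
  pose proof (greatest_upto_le (fun i => ancestor i a = ancestor i b)
                               (Nat.min (depth a) (depth b))).
  fold (meet a b) in H. lia.
Qed.

Lemma meet_iff a b i :
  i <= depth a -> i <= depth b -> (ancestor i a = ancestor i b <-> i <= meet a b).
Proof.
  intros H1 H2; split; [intros; apply greatest_upto_max; auto; lia|]. intros H.
  pose proof (meet_spec a b). pose proof (meet_le a b).
  rewrite <- (ancestor_ancestor i (meet a b) a), <- (ancestor_ancestor i (meet a b) b) by lia.
  congruence.
Qed.

Lemma meet_sym a b : meet a b = meet b a.
Proof.
  pose proof (meet_le a b). pose proof (meet_le b a).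
  apply Nat.le_antisymm; apply meet_iff; try lia; symmetry; apply meet_spec.
Qed.

Lemma meet_refl a : meet a a = depth a.
Proof. pose proof (meet_le a a). apply Nat.le_antisymm; [lia|apply meet_iff; auto]. Qed.

Lemma meet_ultrametric a b c : Nat.min (meet a c) (meet c b) <= meet a b.
Proof.
  pose proof (meet_le a c). pose proof (meet_le c b).
  apply meet_iff; try lia.
  transitivity (ancestor (Nat.min (meet a c) (meet c b)) c); apply meet_iff; lia.
Qed.

Lemma meet_ancestor k a b : k <= depth a -> meet (ancestor k a) b = Nat.min k (meet a b).
Proof.
  intros Hk. pose proof (meet_le a b). pose proof (meet_le (ancestor k a) b).
  rewrite depth_ancestor in H0 by auto.
  apply Nat.le_antisymm.
  - apply Nat.min_glb; [lia|]. apply meet_iff; try lia.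
    rewrite <- (ancestor_ancestor (meet (ancestor k a) b) k a) by lia. apply meet_spec.
  - apply meet_iff; try (rewrite depth_ancestor; lia); try lia.
    rewrite ancestor_ancestor by lia. apply meet_iff; lia.
Qed.

Lemma meet_parv a b : 0 < depth a -> meet (parv a) b = Nat.min (depth a - 1) (meet a b).
Proof. intros H. rewrite parv_as_ancestor by auto. apply meet_ancestor; lia. Qed.

Lemma meet_parv_r a b : 0 < depth b -> meet a (parv b) = Nat.min (depth b - 1) (meet a b).
Proof. intros H. rewrite meet_sym, meet_parv by auto. rewrite meet_sym; auto. Qed.

Lemma meet_root b : meet v b = 0.
Proof. pose proof (meet_le v b). rewrite depth_root in H. lia. Qed.

Definition climb (x : V) (i n : nat) : list V := map (fun k => ancestor k x) (seq i n).

Definition descent (y : V) (L i n : nat) : list V := map (fun k => ancestor (L - k) y) (seq i n).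

Lemma climb_chain x i n : i + n <= depth x -> chain adj (ancestor i x) (climb x (S i) n).
Proof.
  unfold climb. revert i; induction n; intros i H; simpl; auto. split.
  - apply adj_ancestor; lia.
  - apply IHn; lia.
Qed.

Lemma descent_chain y L i n : L = depth y -> i + n < L + 1 ->
  chain adj (ancestor (L - i) y) (descent y L (S i) n).
Proof.
  unfold descent. revert i; induction n; intros i HL H; simpl; auto. split.
  - apply tadj_sym. replace (L - i) with (S (L - S i)) by lia. apply adj_ancestor; lia.
  - apply IHn; lia.
Qed.

Lemma in_ancestors (F : nat -> nat) x z i n :
  (forall k, i <= k < i + n -> F k <= depth x) ->
  In z (map (fun k => ancestor (F k) x) (seq i n)) ->
  exists k, i <= k < i + n /\ z = ancestor (F k) x /\ depth z = F k.
Proof.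
  intros HF Hz. apply in_map_iff in Hz as [k [<- Hk]]. apply in_seq in Hk.
  exists k. rewrite depth_ancestor by (apply HF; lia). auto.
Qed.

Lemma ancestors_NoDup (F : nat -> nat) x i n :
  (forall k, i <= k < i + n -> F k <= depth x) ->
  (forall k k', i <= k < i + n -> i <= k' < i + n -> F k = F k' -> k = k') ->
  NoDup (map (fun k => ancestor (F k) x) (seq i n)).
Proof.
  intros HF Hinj. apply NoDup_map_NoDup_ForallPairs; [|apply seq_NoDup].
  intros a b Ha Hb E. apply in_seq in Ha, Hb. apply (f_equal depth) in E.
  rewrite !depth_ancestor in E by (apply HF; lia). apply Hinj; lia.
Qed.

Lemma climb_descent_NoDup x y L j cn : j < L -> depth x = L -> depth y = L ->
  (forall i, S j <= i <= L -> ancestor i x <> ancestor i y) ->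
  NoDup cn -> (forall z, In z cn -> L < depth z) ->
  NoDup (ancestor j x :: climb x (S j) (L - j) ++ cn ++ descent y L 0 (L - j)).
Proof.
  intros Hj Hx Hy Hdiff Hnd Hcn.
  assert (Hla : forall z, In z (climb x (S j) (L - j)) ->
                 exists k, S j <= k <= L /\ z = ancestor k x /\ depth z = k).
  { intros z Hz. apply (in_ancestors (fun k => k)) in Hz as [k [Hk1 Hk2]]; [|intros; lia].
    exists k; split; [lia|exact Hk2]. }
  assert (Hlb : forall z, In z (descent y L 0 (L - j)) ->
                 exists k, k < L - j /\ z = ancestor (L - k) y /\ depth z = L - k).
  { intros z Hz. apply (in_ancestors (fun k => L - k)) in Hz as [k [Hk1 Hk2]]; [|intros; lia].
    exists k; split; [lia|exact Hk2]. }
  constructor.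
  - intros Hin. apply in_app_or in Hin as [Hin|Hin]; [|apply in_app_or in Hin as [Hin|Hin]].
    + apply Hla in Hin as [k [? [_ E]]]. rewrite depth_ancestor in E; lia.
    + apply Hcn in Hin. rewrite depth_ancestor in Hin; lia.
    + apply Hlb in Hin as [k [? [_ E]]]. rewrite depth_ancestor in E; lia.
  - apply NoDup_app; [|apply NoDup_app|].
    + apply (ancestors_NoDup (fun k => k)); lia.
    + auto.
    + apply (ancestors_NoDup (fun k => L - k)); lia.
    + intros a Ha Hb. apply Hcn in Ha. apply Hlb in Hb as [k [? [_ E]]]. lia.
    + intros a Ha Hb. apply Hla in Ha as [k [? [-> Ek]]].
      apply in_app_or in Hb as [Hb|Hb]; [apply Hcn in Hb; lia|].
      apply Hlb in Hb as [k' [? [E Ek']]]. apply (Hdiff k); [lia|]. rewrite E. f_equal. lia.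
Qed.

(* Two distinct vertices of depth [L] joined by a path below depth [L] would close, through
   their ancestors down to the depth where these first agree, a cycle. *)
Lemma no_deep_path x y L cn : x <> y -> depth x = L -> depth y = L -> NoDup cn ->
  (forall z, In z cn -> L < depth z) -> chain adj x (cn ++ [y]) -> False.
Proof.
  intros Hxy Hx Hy Hnd Hcn Hch.
  set (j := meet x y). pose proof (meet_le x y) as Hj.
  assert (Hj' : j < L).
  { destruct (Nat.eq_dec j L) as [E|E]; [|fold j in Hj; lia]. exfalso; apply Hxy.
    rewrite <- (ancestor_depth x), <- (ancestor_depth y), Hx, Hy, <- E. apply meet_spec. }
  assert (Hdiff : forall i, S j <= i <= L -> ancestor i x <> ancestor i y).
  { intros i Hi E. apply meet_iff in E; fold j in E; lia. }
  set (d := L - j).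
  assert (Hlb : descent y L 0 d = y :: descent y L 1 (d - 1)).
  { unfold descent. replace d with (S (d - 1)) at 1 by lia. simpl. f_equal.
    rewrite Nat.sub_0_r, <- Hy. apply ancestor_depth. }
  apply (tacyc T). exists (ancestor j x), (climb x (S j) d ++ cn ++ descent y L 0 d).
  split; [|split; [apply climb_descent_NoDup; auto|split]].
  - unfold climb, descent. rewrite !length_app, !length_map, !length_seq. lia.
  - apply chain_app; [apply climb_chain; lia|].
    assert (Hla : last (climb x (S j) d) (ancestor j x) = x).
    { unfold climb. replace d with (S (d - 1)) by lia.
      rewrite <- (app_nil_l (map _ _)), last_map_seq.
      replace (S j + (d - 1)) with L by lia. rewrite <- Hx. apply ancestor_depth. }
    rewrite Hla, Hlb.
    rewrite (app_assoc cn [y] (descent _ _ _ _) : cn ++ y :: _ = _).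
    apply chain_app; auto. rewrite last_last.
    replace y with (ancestor (L - 0) y) at 1 by (rewrite Nat.sub_0_r, <- Hy; apply ancestor_depth).
    apply descent_chain; lia.
  - assert (E : last (climb x (S j) d ++ cn ++ descent y L 0 d) (ancestor j x) = ancestor (S j) y).
    { replace (descent y L 0 d) with (descent y L 0 (S (d - 1))) by (f_equal; lia).
      unfold descent. rewrite app_assoc, last_map_seq. f_equal. lia. }
    assert (Ej : ancestor j x = ancestor j y) by apply meet_spec.
    rewrite E, Ej. apply tadj_sym, adj_ancestor; lia.
Qed.

Lemma adj_depth_neq a b : adj a b -> depth a <> depth b.
Proof.
  intros H E. apply (no_deep_path a b (depth a) []); auto.
  - intro; subst; eapply tadj_irr; eauto.
  - constructor.
  - intros z [].
  - simpl; auto.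
Qed.

Lemma parv_unique a b : adj b a -> S (depth b) = depth a -> b = parv a.
Proof.
  intros H E. destruct (classic (b = parv a)) as [|Hn]; auto. exfalso.
  destruct (parv_spec a) as [H1 H2]; [lia|].
  apply (no_deep_path b (parv a) (depth b) [a]); auto; try lia.
  - constructor; [intros []|constructor].
  - intros z [<-|[]]; lia.
  - simpl; auto.
Qed.

Lemma adj_cases a b : adj a b ->
  (S (depth a) = depth b /\ a = parv b) \/ (S (depth b) = depth a /\ b = parv a).
Proof.
  intros H. pose proof (depth_adj _ _ H). pose proof (depth_adj _ _ (tadj_sym T _ _ H)).
  pose proof (adj_depth_neq _ _ H).
  destruct (Nat.lt_ge_cases (depth a) (depth b)).
  - left. assert (S (depth a) = depth b) by lia. split; auto. apply parv_unique; auto.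
  - right. assert (S (depth b) = depth a) by lia. split; auto.
    apply parv_unique; [apply tadj_sym|]; auto.
Qed.

Lemma walk_up c a n : walk adj c a n -> depth a = depth c + n -> c = parv_iter n a.
Proof.
  intros W; induction W as [|b a n W IH Hadj]; intros E; [reflexivity|].
  pose proof (depth_walk _ _ _ W). pose proof (depth_adj _ _ Hadj).
  rewrite (IH ltac:(lia)), (parv_unique a b Hadj ltac:(lia)).
  unfold parv_iter. rewrite <- Nat.iter_succ_r. reflexivity.
Qed.

Lemma gdist_ancestor k a : k <= depth a -> gdist T (ancestor k a) a = depth a - k.
Proof.
  intros H. apply Nat.le_antisymm.
  - apply gdist_le_walk, parv_iter_walk; lia.
  - pose proof (depth_walk _ _ _ (gdist_walk T (ancestor k a) a)).
    rewrite depth_ancestor in H0; lia.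
Qed.

Lemma anc_iff c a : anc T v c a <-> depth c <= depth a /\ c = ancestor (depth c) a.
Proof.
  unfold anc. fold (depth c) (depth a). split.
  - intros E. split; [lia|]. apply walk_up; [|lia].
    replace (depth a - depth c) with (gdist T c a) by lia. apply gdist_walk.
  - intros [H1 H2]. rewrite H2 at 2. rewrite gdist_ancestor; lia.
Qed.

Lemma anc_ancestor k a : k <= depth a -> anc T v (ancestor k a) a.
Proof. intros H. apply anc_iff. rewrite depth_ancestor; auto. Qed.

Lemma anc_refl a : anc T v a a.
Proof. apply anc_iff. rewrite ancestor_depth; auto. Qed.

Lemma anc_depth c a : anc T v c a -> depth c <= depth a.
Proof. intros H; apply anc_iff in H; tauto. Qed.

Lemma anc_eq c a : anc T v c a -> c = ancestor (depth c) a.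
Proof. intros H; apply anc_iff in H; tauto. Qed.

Lemma anc_trans a b c : anc T v a b -> anc T v b c -> anc T v a c.
Proof.
  intros H1 H2. apply anc_iff in H1 as [H1 E1]. apply anc_iff in H2 as [H2 E2].
  apply anc_iff. split; [lia|]. rewrite E1 at 1. rewrite E2. apply ancestor_ancestor; lia.
Qed.

Lemma anc_unique c1 c2 a : anc T v c1 a -> anc T v c2 a -> depth c1 = depth c2 -> c1 = c2.
Proof. intros H1 H2 E. rewrite (anc_eq _ _ H1), (anc_eq _ _ H2), E. auto. Qed.

Lemma anc_of_common c c' a : anc T v c a -> anc T v c' a -> depth c <= depth c' -> anc T v c c'.
Proof.
  intros H1 H2 L. apply anc_iff in H1 as [L1 E1]. apply anc_iff in H2 as [L2 E2].
  apply anc_iff. split; auto. rewrite E2 at 1. rewrite ancestor_ancestor by lia. auto.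
Qed.

Lemma anc_parv c : anc T v (parv c) c.
Proof.
  destruct (depth c) eqn:E.
  - rewrite parv_root by auto. apply anc_refl.
  - rewrite parv_as_ancestor by lia. apply anc_ancestor; lia.
Qed.

Lemma anc_meet a b : meet a b = depth a -> anc T v a b.
Proof.
  intros E. pose proof (meet_le a b). apply anc_iff. split; [lia|].
  pose proof (meet_spec a b). rewrite E, ancestor_depth in H0. auto.
Qed.

Lemma meet_anc a b : anc T v a b -> meet a b = depth a.
Proof.
  intros H. pose proof (meet_le a b). apply anc_iff in H as [H1 H2].
  apply Nat.le_antisymm; [lia|]. apply meet_iff; auto. rewrite ancestor_depth; auto.
Qed.

Lemma gdist_meet a b : gdist T a b + 2 * meet a b = depth a + depth b.
Proof.
  apply Nat.le_antisymm.
  - pose proof (meet_le a b).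
    assert (W : walk adj a b ((depth a - meet a b) + (depth b - meet a b))).
    { apply (walk_app (b := ancestor (meet a b) a)).
      - apply (walk_rev (tadj_sym T)). apply parv_iter_walk. lia.
      - rewrite meet_spec. apply parv_iter_walk. lia. }
    apply gdist_le_walk in W. lia.
  - assert (G : forall c n, walk adj a c n -> depth a + depth c <= n + 2 * meet a c).
    { intros c n W. induction W as [|b' c n W IH Hadj]; [rewrite meet_refl; lia|].
      destruct (adj_cases b' c Hadj) as [[E1 E2]|[E1 E2]].
      + subst b'. rewrite meet_parv_r in IH by lia. lia.
      + subst c. rewrite meet_parv_r by lia. pose proof (meet_le a b'). lia. }
    apply G, gdist_walk.
Qed.

End Depth.

Open Scope R_scope.

Ltac rmin_solve :=
  unfold Rmin, Rmax, Rabs in *; repeat (destruct Rle_dec || destruct Rcase_abs); lra.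

Lemma Rabs_le_bounds x a : Rabs x <= a -> -a <= x <= a.
Proof. rmin_solve. Qed.

Lemma legs_edge_edge (la lc X : nat) (t s : R) :
  (X <= S la)%nat -> (X <= S lc)%nat -> ~ (X = S la /\ X = S lc) -> 0 < t < 1 -> 0 < s < 1 ->
  Rmin (Rmin (t + (INR la + INR lc - 2 * INR (Nat.min la (Nat.min lc X))) + s)
             (t + (INR la + INR (S lc) - 2 * INR (Nat.min la X)) + (1 - s)))
       (Rmin (1 - t + (INR (S la) + INR lc - 2 * INR (Nat.min lc X)) + s)
             (1 - t + (INR (S la) + INR (S lc) - 2 * INR X) + (1 - s)))
  = (INR la + t) + (INR lc + s) - 2 * Rmin (INR X) (Rmin (INR la + t) (INR lc + s)).
Proof.
  intros H1 H2 H3 Ht Hs. rewrite !S_INR.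
  destruct (le_lt_dec X la) as [Ha|Ha]; destruct (le_lt_dec X lc) as [Hc|Hc].
  - rewrite (Nat.min_r lc X Hc), (Nat.min_r la X Ha).
    apply le_INR in Ha; apply le_INR in Hc. rmin_solve.
  - assert (X = S lc) by lia. subst X. assert (S lc <= la)%nat by lia.
    rewrite (Nat.min_l lc (S lc)), (Nat.min_r la lc), (Nat.min_r la (S lc)) by lia.
    apply le_INR in H. rewrite S_INR in *. rmin_solve.
  - assert (X = S la) by lia. subst X. assert (S la <= lc)%nat by lia.
    rewrite (Nat.min_r lc (S la)), (Nat.min_l la (S la)) by lia.
    apply le_INR in H. rewrite S_INR in *. rmin_solve.
  - lia.
Qed.

Lemma legs_vertex_edge (la lc X : nat) (s : R) :
  (X <= la)%nat -> (X <= S lc)%nat -> 0 < s < 1 ->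
  Rmin (Rmin (0 + (INR la + INR lc - 2 * INR (Nat.min lc X)) + s)
             (0 + (INR la + INR (S lc) - 2 * INR X) + (1 - s)))
       (Rmin (0 + (INR la + INR lc - 2 * INR (Nat.min lc X)) + s)
             (0 + (INR la + INR (S lc) - 2 * INR X) + (1 - s)))
  = INR la + (INR lc + s) - 2 * Rmin (INR X) (Rmin (INR la) (INR lc + s)).
Proof.
  intros H1 H2 Hs. rewrite !S_INR. apply le_INR in H1.
  destruct (le_lt_dec X lc) as [Hc|Hc].
  - rewrite (Nat.min_r lc X Hc). apply le_INR in Hc. rmin_solve.
  - assert (X = S lc) by lia. subst X. rewrite (Nat.min_l lc (S lc)) by lia.
    rewrite S_INR in *. rmin_solve.
Qed.

Lemma legs_edge_vertex (la lc X : nat) (t : R) :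
  (X <= S la)%nat -> (X <= lc)%nat -> 0 < t < 1 ->
  Rmin (Rmin (t + (INR la + INR lc - 2 * INR (Nat.min la X)) + 0)
             (t + (INR la + INR lc - 2 * INR (Nat.min la X)) + 0))
       (Rmin (1 - t + (INR (S la) + INR lc - 2 * INR X) + 0)
             (1 - t + (INR (S la) + INR lc - 2 * INR X) + 0))
  = (INR la + t) + INR lc - 2 * Rmin (INR X) (Rmin (INR la + t) (INR lc)).
Proof.
  intros H1 H2 Ht. rewrite !S_INR. apply le_INR in H2.
  destruct (le_lt_dec X la) as [Ha|Ha].
  - rewrite (Nat.min_r la X Ha). apply le_INR in Ha. rmin_solve.
  - assert (X = S la) by lia. subst X. rewrite (Nat.min_l la (S la)) by lia.
    rewrite S_INR in *. rmin_solve.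
Qed.

Lemma legs_vertex_vertex (la lc X : nat) :
  (X <= la)%nat -> (X <= lc)%nat ->
  Rmin (Rmin (0 + (INR la + INR lc - 2 * INR X) + 0) (0 + (INR la + INR lc - 2 * INR X) + 0))
       (Rmin (0 + (INR la + INR lc - 2 * INR X) + 0) (0 + (INR la + INR lc - 2 * INR X) + 0))
  = INR la + INR lc - 2 * Rmin (INR X) (Rmin (INR la) (INR lc)).
Proof. intros H1 H2. apply le_INR in H1; apply le_INR in H2. rmin_solve. Qed.

Lemma legs_same_edge (la : nat) (t s : R) : 0 < t < 1 -> 0 < s < 1 ->
  Rmin (Rabs (t - s))
    (Rmin (Rmin (t + 0 + s) (t + 1 + (1 - s))) (Rmin (1 - t + 1 + s) (1 - t + 0 + (1 - s))))
  = (INR la + t) + (INR la + s) - 2 * Rmin (INR la + 1) (Rmin (INR la + t) (INR la + s)).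
Proof. intros. rmin_solve. Qed.

Lemma INR_not_frac (a b : nat) (s : R) : 0 < s < 1 -> INR a <> INR b + s.
Proof.
  intros Hs E. destruct (le_lt_dec a b) as [H|H].
  - apply le_INR in H. lra.
  - apply le_INR in H. rewrite S_INR in H. lra.
Qed.

Lemma INR_frac_inj (a b : nat) (t s : R) :
  0 <= t < 1 -> 0 <= s < 1 -> INR a + t = INR b + s -> a = b /\ t = s.
Proof.
  intros Ht Hs E. destruct (lt_eq_lt_dec a b) as [[H|H]|H].
  - pose proof (le_INR (S a) b H). rewrite S_INR in H0. lra.
  - subst; split; auto; lra.
  - pose proof (le_INR (S b) a H). rewrite S_INR in H0. lra.
Qed.

Lemma INR_frac_le (a b : nat) (t : R) : 0 <= t < 1 -> INR b <= INR a + t -> (b <= a)%nat.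
Proof.
  intros Ht H. destruct (le_lt_dec b a) as [L|L]; auto. exfalso.
  apply le_INR in L. rewrite S_INR in L. lra.
Qed.

Lemma INR_min a b : INR (Nat.min a b) = Rmin (INR a) (INR b).
Proof.
  destruct (Nat.le_ge_cases a b) as [L|L].
  - rewrite Nat.min_l by auto. apply le_INR in L. rmin_solve.
  - rewrite Nat.min_r by auto. apply le_INR in L. rmin_solve.
Qed.

Section Realization.
Variables (T : Tree) (v : tV T).
Notation V := (tV T).
Notation adj := (tadj T).
Notation depth := (depth T v).
Notation ancestor := (ancestor T v).
Notation parv := (parv T v).
Notation meet := (meet T v).
Notation valid := (valid T v).

Definition tip (x : raw V) : V := match x with PV a => a | PE _ b _ => b end.

Definition height (x : raw V) : R :=
  match x with PV a => INR (depth a) | PE a _ t => INR (depth a) + t end.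

(* the height at which the arcs from the root to [x] and to [y] part *)
Definition gprod (x y : raw V) : R :=
  Rmin (INR (meet (tip x) (tip y))) (Rmin (height x) (height y)).

Definition tdist (x y : raw V) : R := height x + height y - 2 * gprod x y.

Lemma valid_edge a b t :
  valid (PE a b t) -> adj a b /\ depth b = S (depth a) /\ a = parv b /\ 0 < t < 1.
Proof.
  intros [H1 [[n [Ha Hb]] Ht]]. apply gdist_unique in Ha, Hb.
  fold (depth a) in Ha; fold (depth b) in Hb.
  assert (E : depth b = S (depth a)) by lia. repeat split; auto; try lra.
  apply parv_unique; auto.
Qed.

Lemma gdist_real p q : INR (gdist T p q) = INR (depth p) + INR (depth q) - 2 * INR (meet p q).
Proof.
  pose proof (gdist_meet T v p q). apply (f_equal INR) in H.
  rewrite plus_INR, mult_INR, plus_INR in H. simpl in H. lra.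
Qed.

Lemma rdist_tdist x y : valid x -> valid y -> rdist T x y = tdist x y.
Proof.
  intros Vx Vy. destruct x as [a|a b t]; destruct y as [c|c d s].
  - unfold rdist, via, leg; simpl. rewrite gdist_real. unfold tdist, gprod, height; simpl.
    pose proof (meet_le T v a c). apply legs_vertex_vertex; lia.
  - apply valid_edge in Vy as [Hcd [Ed [Ec Hs]]].
    unfold rdist, via, leg; simpl. rewrite (gdist_real a c), (gdist_real a d).
    unfold tdist, gprod, height; simpl.
    assert (E : meet a c = Nat.min (depth c) (meet a d)).
    { rewrite Ec at 1. rewrite meet_parv_r by lia. rewrite Ed; f_equal; lia. }
    rewrite E, Ed. pose proof (meet_le T v a d). apply legs_vertex_edge; auto; lia.
  - apply valid_edge in Vx as [Hab [Eb [Ea Ht]]].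
    unfold rdist, via, leg; simpl. rewrite (gdist_real a c), (gdist_real b c).
    unfold tdist, gprod, height; simpl.
    assert (E : meet a c = Nat.min (depth a) (meet b c)).
    { rewrite Ea at 1. rewrite meet_parv by lia. rewrite Eb; f_equal; lia. }
    rewrite E, Eb. pose proof (meet_le T v b c). apply legs_edge_vertex; auto; lia.
  - apply valid_edge in Vx as [Hab [Eb [Ea Ht]]], Vy as [Hcd [Ed [Ec Hs]]].
    unfold rdist. destruct excluded_middle_informative as [[<- <-]|Hne].
    + unfold via, leg; simpl. rewrite (gdist_sym T b a), !gdist_refl, !gdist_adj by auto.
      unfold tdist, gprod, height; simpl. rewrite meet_refl, Eb, S_INR. apply legs_same_edge; auto.
    + unfold via, leg; simpl.
      rewrite (gdist_real a c), (gdist_real a d), (gdist_real b c), (gdist_real b d).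
      unfold tdist, gprod, height; simpl.
      set (X := meet b d).
      assert (E1 : meet a c = Nat.min (depth a) (Nat.min (depth c) X)).
      { rewrite Ea at 1. rewrite meet_parv by lia. rewrite Ec at 1.
        rewrite meet_parv_r by lia. rewrite Eb, Ed. f_equal; [lia|f_equal; lia]. }
      assert (E2 : meet a d = Nat.min (depth a) X).
      { rewrite Ea at 1. rewrite meet_parv by lia. rewrite Eb; f_equal; lia. }
      assert (E3 : meet b c = Nat.min (depth c) X).
      { rewrite Ec at 1. rewrite meet_parv_r by lia. rewrite Ed; f_equal; lia. }
      rewrite E1, E2, E3, Eb, Ed. pose proof (meet_le T v b d). fold X in H.
      apply legs_edge_edge; auto; try lia.
      intros [H1 H2]. apply Hne.
      assert (b = d) by (apply (anc_unique T v b d d); [apply anc_meet| apply anc_refl|]; lia).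
      subst d. split; congruence.
Qed.

Lemma height_nonneg x : valid x -> 0 <= height x.
Proof.
  intros Vx; destruct x as [a|a b t]; simpl; [apply pos_INR|].
  apply valid_edge in Vx as [_ [_ [_ Ht]]]. pose proof (pos_INR (depth a)). lra.
Qed.

Lemma height_tip x : valid x -> height x <= INR (depth (tip x)) < height x + 1.
Proof.
  intros Vx; destruct x as [a|a b t]; simpl; [lra|].
  apply valid_edge in Vx as [_ [Eb [_ Ht]]]. rewrite Eb, S_INR. lra.
Qed.

Lemma depth_tip_ge k x : valid x -> INR k <= height x -> (k <= depth (tip x))%nat.
Proof. intros Vx H. pose proof (height_tip x Vx). apply INR_le. lra. Qed.

Lemma gprod_le_l x y : gprod x y <= height x.
Proof. unfold gprod. rmin_solve. Qed.

Lemma gprod_le_r x y : gprod x y <= height y.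
Proof. unfold gprod. rmin_solve. Qed.

Lemma gprod_sym x y : gprod x y = gprod y x.
Proof. unfold gprod. rewrite meet_sym. rmin_solve. Qed.

Lemma gprod_nonneg x y : valid x -> valid y -> 0 <= gprod x y.
Proof.
  intros. pose proof (height_nonneg x H). pose proof (height_nonneg y H0).
  pose proof (pos_INR (meet (tip x) (tip y))). unfold gprod. rmin_solve.
Qed.

Lemma gprod_self x : valid x -> gprod x x = height x.
Proof. intros Vx. pose proof (height_tip x Vx). unfold gprod. rewrite meet_refl. rmin_solve. Qed.

Lemma gprod_ultrametric x y z : Rmin (gprod x z) (gprod z y) <= gprod x y.
Proof.
  unfold gprod. pose proof (le_INR _ _ (meet_ultrametric T v (tip x) (tip y) (tip z))).
  rewrite INR_min in H. rmin_solve.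
Qed.

Lemma tdist_sym x y : tdist x y = tdist y x.
Proof. unfold tdist; rewrite gprod_sym; ring. Qed.

Lemma tdist_self x : valid x -> tdist x x = 0.
Proof. intros; unfold tdist; rewrite gprod_self; auto; ring. Qed.

Lemma tdist_nonneg x y : 0 <= tdist x y.
Proof. unfold tdist. pose proof (gprod_le_l x y); pose proof (gprod_le_r x y). lra. Qed.

Lemma tdist_triangle x y z : tdist x y <= tdist x z + tdist z y.
Proof.
  unfold tdist. pose proof (gprod_ultrametric x y z).
  pose proof (gprod_le_r x z). pose proof (gprod_le_l z y). rmin_solve.
Qed.

Lemma tdist_height x y : Rabs (height x - height y) <= tdist x y.
Proof. unfold tdist. pose proof (gprod_le_l x y); pose proof (gprod_le_r x y). rmin_solve. Qed.

Lemma tdist_root x : valid x -> tdist (PV v) x = height x.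
Proof.
  intros Vx. unfold tdist, gprod; simpl. rewrite meet_root, depth_root. simpl.
  pose proof (height_nonneg x Vx). rmin_solve.
Qed.

Lemma tdist_eq0 x y : valid x -> valid y -> tdist x y = 0 -> x = y.
Proof.
  intros Vx Vy E. unfold tdist in E. pose proof (gprod_le_l x y); pose proof (gprod_le_r x y).
  assert (H1 : gprod x y = height x) by lra. assert (H2 : height x = height y) by lra.
  assert (H3 : height x <= INR (meet (tip x) (tip y))) by (unfold gprod in H1; rmin_solve).
  destruct x as [a|a b t]; destruct y as [c|c d s]; simpl in *.
  - apply INR_eq in H2. apply INR_le in H3. pose proof (meet_le T v a c).
    f_equal. apply (anc_unique T v a c c); [apply anc_meet; lia|apply anc_refl|auto].
  - apply valid_edge in Vy as [_ [_ [_ Hs]]]. exfalso; eapply INR_not_frac; eauto.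
  - apply valid_edge in Vx as [_ [_ [_ Ht]]].
    exfalso; eapply INR_not_frac; [|symmetry]; eauto.
  - apply valid_edge in Vx as [_ [Eb [Ea Ht]]], Vy as [_ [Ed [Ec Hs]]].
    destruct (INR_frac_inj (depth a) (depth c) t s) as [E1 E2]; try lra. subst s.
    assert (M : (depth b <= meet b d)%nat).
    { rewrite Eb. destruct (le_lt_dec (S (depth a)) (meet b d)) as [L|L]; auto.
      apply le_INR in L. rewrite !S_INR in L. lra. }
    pose proof (meet_le T v b d).
    assert (b = d) by (apply (anc_unique T v b d d); [apply anc_meet| apply anc_refl|]; lia).
    subst d. f_equal; congruence.
Qed.

Lemma pdist_tdist (x y : pt T v) : pdist T v x y = tdist (proj1_sig x) (proj1_sig y).
Proof. apply rdist_tdist; apply proj2_sig. Qed.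

Lemma pt_eq (x y : pt T v) : proj1_sig x = proj1_sig y -> x = y.
Proof. destruct x, y; simpl; intros ->; f_equal; apply proof_irrelevance. Qed.

Lemma pdist_root (x : pt T v) : pdist T v (vpt T v v) x = height (proj1_sig x).
Proof. rewrite pdist_tdist. apply tdist_root, proj2_sig. Qed.

End Realization.

Definition nat_floor (r : R) : nat := Z.to_nat (up r - 1).

Lemma nat_floor_spec r : 0 <= r -> INR (nat_floor r) <= r < INR (nat_floor r) + 1.
Proof.
  intros Hr. destruct (archimed r) as [H1 H2]. unfold nat_floor.
  assert (Hz : (0 <= up r - 1)%Z).
  { assert (0 < IZR (up r)) by lra. apply lt_0_IZR in H. lia. }
  rewrite INR_IZR_INZ, Z2Nat.id by auto. rewrite minus_IZR. simpl. lra.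
Qed.

Lemma exists_nat_gt (N : R) : exists L : nat, N < INR L.
Proof.
  exists (S (nat_floor (Rmax 0 N))). pose proof (nat_floor_spec (Rmax 0 N)). rewrite S_INR.
  assert (0 <= Rmax 0 N) by rmin_solve. specialize (H H0). rmin_solve.
Qed.

Section Retraction.
Variables (T : Tree) (v : tV T).
Notation V := (tV T).
Notation depth := (depth T v).
Notation ancestor := (ancestor T v).
Notation meet := (meet T v).
Notation valid := (valid T v).
Notation height := (height T v).
Notation gprod := (gprod T v).
Notation tdist := (tdist T v).
Notation tip := (tip T).

(* the point of the arc [v, x] at height [r] (clamped to [[0, height x]]) *)
Definition retract (r : R) (x : raw V) : raw V :=
  let r' := Rmax 0 r in
  if Rle_dec (height x) r' then x
  else let n := nat_floor r' in
    if Req_dec_T r' (INR n) then PV (ancestor n (tip x))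
    else PE (ancestor n (tip x)) (ancestor (S n) (tip x)) (r' - INR n).

Lemma floor_below_tip r x : valid x -> 0 <= r -> ~ height x <= r ->
  (nat_floor r <= depth (tip x))%nat /\
  (r <> INR (nat_floor r) -> (S (nat_floor r) <= depth (tip x))%nat).
Proof.
  intros Vx Hr Hh. pose proof (nat_floor_spec r Hr). pose proof (height_tip T v x Vx).
  split; [apply INR_le; lra|]. intros Hne. apply INR_lt. lra.
Qed.

Lemma retract_valid r x : valid x -> valid (retract r x).
Proof.
  intros Vx. unfold retract. set (r' := Rmax 0 r).
  assert (Hr : 0 <= r') by (unfold r'; rmin_solve).
  destruct Rle_dec as [H|H]; auto.
  pose proof (nat_floor_spec r' Hr) as Hf. set (n := nat_floor r') in *.
  destruct Req_dec_T as [E|E]; [exact I|].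
  destruct (floor_below_tip r' x Vx Hr H) as [_ Hn]. specialize (Hn E). fold n in Hn.
  split; [|split].
  - apply adj_ancestor; auto.
  - exists n. split.
    + rewrite <- (depth_ancestor T v n (tip x)) at 2 by lia. apply depth_spec.
    + rewrite <- (depth_ancestor T v (S n) (tip x)) at 2 by lia. apply depth_spec.
  - lra.
Qed.

Lemma height_retract r x : valid x -> height (retract r x) = Rmin (Rmax 0 r) (height x).
Proof.
  intros Vx. unfold retract. set (r' := Rmax 0 r).
  assert (Hr : 0 <= r') by (unfold r'; rmin_solve).
  destruct Rle_dec as [H|H]; [rmin_solve|].
  pose proof (nat_floor_spec r' Hr) as Hf. set (n := nat_floor r') in *.
  destruct (floor_below_tip r' x Vx Hr H) as [Hn _]. fold n in Hn.
  destruct Req_dec_T as [E|E]; simpl; rewrite depth_ancestor by auto; rmin_solve.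
Qed.

Lemma gprod_retract r x z : valid x -> valid z ->
  gprod (retract r x) z = Rmin (Rmin (Rmax 0 r) (height x)) (gprod x z).
Proof.
  intros Vx Vz. pose proof (height_retract r x Vx) as Hh. revert Hh.
  unfold retract. set (r' := Rmax 0 r).
  assert (Hr : 0 <= r') by (unfold r'; rmin_solve).
  pose proof (gprod_le_l T v x z).
  destruct Rle_dec as [H1|H1]; intros Hh; [rmin_solve|].
  pose proof (nat_floor_spec r' Hr) as Hf. set (n := nat_floor r') in *.
  destruct (floor_below_tip r' x Vx Hr H1) as [Hn0 Hn]. fold n in Hn0, Hn.
  destruct Req_dec_T as [E|E]; unfold gprod in *; simpl in *; rewrite Hh.
  - rewrite meet_ancestor, INR_min, <- E by auto. rmin_solve.
  - specialize (Hn E). rewrite meet_ancestor, INR_min, S_INR by auto. rmin_solve.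
Qed.

Lemma tdist_retract r r' x y : valid x -> valid y ->
  tdist (retract r x) (retract r' y) <= Rabs (r - r') + tdist x y.
Proof.
  intros Vx Vy. unfold tdist.
  rewrite gprod_retract by (auto; apply retract_valid; auto).
  rewrite gprod_sym, gprod_retract by auto. rewrite !height_retract by auto.
  rewrite (gprod_sym T v y x).
  pose proof (gprod_le_l T v x y). pose proof (gprod_le_r T v x y). rmin_solve.
Qed.

Lemma retract_height r x : valid x -> height x <= r -> retract r x = x.
Proof.
  intros Vx H. unfold retract. destruct Rle_dec as [H1|H1]; auto. exfalso; apply H1. rmin_solve.
Qed.

Lemma retract_root r : retract r (PV v) = PV v.
Proof.
  unfold retract. destruct Rle_dec as [H|H]; auto.
  exfalso; apply H. simpl. rewrite depth_root. simpl. rmin_solve.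
Qed.

Lemma retract_gprod A B :
  valid A -> valid B -> tdist (retract (gprod A B) A) (retract (gprod A B) B) = 0.
Proof.
  intros VA VB. unfold tdist.
  rewrite (gprod_retract (gprod A B) A (retract (gprod A B) B)); [|auto|apply retract_valid; auto].
  rewrite (gprod_sym T v A (retract (gprod A B) B)), gprod_retract by auto.
  rewrite !height_retract by auto. rewrite (gprod_sym T v B A).
  pose proof (gprod_le_l T v A B). pose proof (gprod_le_r T v A B).
  pose proof (gprod_nonneg T v A B VA VB). rmin_solve.
Qed.

Definition retractP (r : R) (x : pt T v) : pt T v :=
  exist _ (retract r (proj1_sig x)) (retract_valid r _ (proj2_sig x)).

Lemma inSub_gprod c x : valid x -> (inSub T v c x <-> gprod (PV c) x = INR (depth c)).
Proof.
  intros Vx. pose proof (meet_le T v c (tip x)) as Hm.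
  destruct x as [a|a b t]; unfold gprod; simpl in *.
  - split.
    + intros H. rewrite meet_anc by auto. apply (anc_depth T v), le_INR in H. rmin_solve.
    + intros E. apply anc_meet.
      assert (H0 : INR (depth c) <= INR (meet c a)) by (rewrite <- E; rmin_solve).
      apply INR_le in H0. lia.
  - apply valid_edge in Vx as [Hab [Eb [Ea Ht]]]. split.
    + intros H1. assert (Hcb : anc T v c b)
        by (eapply anc_trans; [eauto|rewrite Ea; apply anc_parv]).
      rewrite meet_anc by auto. apply (anc_depth T v), le_INR in H1. rmin_solve.
    + intros E.
      assert (H0 : INR (depth c) <= INR (meet c b)) by (rewrite <- E; rmin_solve).
      assert (H2 : INR (depth c) <= INR (depth a) + t) by (rewrite <- E; rmin_solve).
      apply INR_le in H0. apply INR_frac_le in H2; [|lra].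
      apply anc_iff. split; auto.
      assert (Hcb : anc T v c b) by (apply anc_meet; lia).
      apply anc_eq in Hcb. rewrite Ea at 1. rewrite parv_as_ancestor, ancestor_ancestor by lia.
      auto.
Qed.

(* [label k x] is the vertex of depth [k + 1] below which [x] lies (when [x] is that deep) *)
Definition label (k : nat) (x : raw V) : V := ancestor (S k) (tip x).

Lemma depth_label k x : valid x -> INR (S k) <= height x -> depth (label k x) = S k.
Proof. intros Vx H. apply depth_ancestor, depth_tip_ge; auto. Qed.

Lemma inSub_label k x : valid x -> INR (S k) <= height x -> inSub T v (label k x) x.
Proof.
  intros Vx H. pose proof (depth_tip_ge T v _ _ Vx H) as Hk.
  apply inSub_gprod; auto. unfold gprod, label. simpl.
  rewrite meet_anc by (apply anc_ancestor; auto). rewrite depth_ancestor by auto. rmin_solve.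
Qed.

Lemma inSub_height c x : valid x -> inSub T v c x -> INR (depth c) <= height x.
Proof. intros Vx H. apply inSub_gprod in H; auto. rewrite <- H. apply gprod_le_r. Qed.

Lemma inSub_label_eq k c x : valid x -> inSub T v c x -> depth c = S k -> c = label k x.
Proof.
  intros Vx H E. pose proof (meet_le T v c (tip x)). apply inSub_gprod in H; auto.
  unfold gprod in H; simpl in H.
  assert (INR (depth c) <= INR (meet c (tip x))) by (rewrite <- H; rmin_solve).
  apply INR_le in H1. unfold label. rewrite <- E. apply anc_eq, anc_meet. lia.
Qed.

Lemma label_close k x y : valid x -> valid y -> INR (S k) <= height x -> INR (S k) <= height y ->
  tdist x y < 2 -> label k x = label k y.
Proof.
  intros Vx Vy Hx Hy HD. unfold tdist in HD.
  assert (Hm : INR k < gprod x y) by (rewrite S_INR in *; lra).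
  unfold gprod in Hm. assert (INR k < INR (meet (tip x) (tip y))) by rmin_solve.
  apply INR_lt in H.
  unfold label. apply meet_iff; try lia; apply depth_tip_ge; auto.
Qed.

Lemma inSub_gprod_le c x y : valid x -> valid y -> inSub T v c x -> inSub T v c y ->
  INR (depth c) <= gprod x y.
Proof.
  intros Vx Vy H1 H2. apply inSub_gprod in H1, H2; auto.
  pose proof (gprod_ultrametric T v x y (PV c)). rewrite gprod_sym in H1. rewrite H1, H2 in H.
  rmin_solve.
Qed.

Lemma retract_inSub c x : valid x -> inSub T v c x -> retract (INR (depth c)) x = PV c.
Proof.
  intros Vx H. apply (tdist_eq0 T v); [apply retract_valid; auto|exact I|].
  pose proof (inSub_height c x Vx H). pose proof (pos_INR (depth c)).
  apply inSub_gprod in H; auto.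
  unfold tdist. rewrite gprod_retract by (auto; exact I). rewrite height_retract by auto.
  rewrite gprod_sym, H. simpl. rmin_solve.
Qed.

End Retraction.

Lemma locally_constant_interval {X : Type} (F : R -> X) a b : a <= b ->
  (forall s, a <= s <= b -> exists d, 0 < d /\
     forall s', a <= s' <= b -> Rabs (s - s') < d -> F s' = F s) ->
  F b = F a.
Proof.
  intros Hab Hloc.
  set (E := fun s => a <= s <= b /\ F s = F a).
  assert (Hb : bound E) by (exists b; intros s [Hs _]; lra).
  assert (He : exists s, E s) by (exists a; split; [lra|auto]).
  destruct (completeness E Hb He) as [c [Hub Hlub]].
  assert (Hac : a <= c) by (apply Hub; split; [lra|auto]).
  assert (Hcb : c <= b) by (apply Hlub; intros s [Hs _]; lra).
  destruct (Hloc c (conj Hac Hcb)) as [d [Hd Hl]].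
  assert (Fc : F c = F a).
  { destruct (classic (exists s, E s /\ c - d < s)) as [[s [[Hs Es] Hs']]|Hno].
    - assert (s <= c) by (apply Hub; split; auto).
      rewrite <- Es. symmetry. apply Hl; auto. rmin_solve.
    - exfalso. assert (c <= c - d); [|lra]. apply Hlub. intros s Es.
      destruct (Rle_dec s (c - d)); auto. exfalso; apply Hno; exists s; split; auto; lra. }
  destruct (Req_dec c b) as [->|Hne]; auto.
  set (s' := Rmin b (c + d / 2)).
  assert (Hs' : a <= s' <= b) by (unfold s'; rmin_solve).
  assert (E s') by (split; auto; rewrite <- Fc; apply Hl; auto; unfold s'; rmin_solve).
  apply Hub in H. unfold s' in H. rmin_solve.
Qed.

Section Bonds.
Variable A : tower.
Open Scope nat_scope.

Lemma bond_le n m x y : bond A n m x y -> n <= m.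
Proof. intros H; induction H; lia. Qed.

Lemma bond_refl_inv n x y : bond A n n x y -> y = x.
Proof.
  intros H. inversion H.
  - match goal with E : existT _ _ _ = existT _ _ _ |- _ =>
      apply inj_pair2_eq_dec in E; [|exact Nat.eq_dec] end.
    subst. reflexivity.
  - match goal with B : bond A n _ _ _ |- _ => apply bond_le in B end. lia.
Qed.

Lemma bond_step_inv n m x y : n <= m -> bond A n (S m) x y -> bond A n m (tp A m x) y.
Proof.
  intros Hnm H. inversion H; [lia|].
  repeat match goal with E : existT _ _ _ = existT _ _ _ |- _ =>
    apply inj_pair2_eq_dec in E; [|exact Nat.eq_dec] end.
  subst. auto.
Qed.

Lemma bond_fun n m x y1 y2 : bond A n m x y1 -> bond A n m x y2 -> y1 = y2.
Proof.
  intros H1; revert y2; induction H1; intros y2 H2.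
  - symmetry; apply bond_refl_inv; auto.
  - apply IHbond, bond_step_inv; auto. apply bond_le in H1; auto.
Qed.

Lemma bond_exists n m x : n <= m -> exists y, bond A n m x y.
Proof.
  revert x; induction m; intros x Hnm.
  - assert (n = 0) by lia. subst. exists x; constructor.
  - destruct (Nat.eq_dec n (S m)) as [->|Hne]; [exists x; constructor|].
    destruct (IHm (tp A m x)) as [y Hy]; [lia|]. exists y; constructor; auto.
Qed.

Lemma bond_trans n k m x y z : bond A n k y z -> bond A k m x y -> bond A n m x z.
Proof. intros H1 H2; induction H2; auto. constructor; auto. Qed.

Lemma bond_one n x : bond A n (S n) x (tp A n x).
Proof. constructor; constructor. Qed.

End Bonds.

Section Ends.
Variables (T : Tree) (v : tV T).

Lemma Cset_depth k (c : Cset T v k) : depth T v (proj1_sig c) = S k.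
Proof. destruct c as [c Hc]; simpl. apply gdist_unique in Hc. auto. Qed.

Lemma Cset_eq k (c1 c2 : Cset T v k) : proj1_sig c1 = proj1_sig c2 -> c1 = c2.
Proof. destruct c1, c2; simpl; intros ->; f_equal; apply proof_irrelevance. Qed.

Lemma gdistR_depth a k : depth T v a = S k -> gdistR (tadj T) v a (S k).
Proof. intros E. rewrite <- E. apply depth_spec. Qed.

Lemma parent_val k (c : Cset T v (S k)) : proj1_sig (parent T v k c) = parv T v (proj1_sig c).
Proof.
  unfold parent. simpl.
  destruct (constructive_indefinite_description _ _) as [u [Hu1 Hu2]]. simpl.
  pose proof (Cset_depth _ c). apply gdist_unique in Hu2. fold (depth T v u) in Hu2.
  apply parv_unique; [apply tadj_sym; auto|lia].
Qed.

Lemma bond_anc n m (x : Cset T v m) (y : Cset T v n) :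
  bond (eta T v) n m x y -> anc T v (proj1_sig y) (proj1_sig x).
Proof.
  intros H; induction H; [apply anc_refl|].
  change (tp (eta T v) m x) with (parent T v m x) in IHbond. rewrite parent_val in IHbond.
  eapply anc_trans; [eauto|apply anc_parv].
Qed.

Lemma anc_bond n m (x : Cset T v m) (y : Cset T v n) : (n <= m)%nat ->
  anc T v (proj1_sig y) (proj1_sig x) -> bond (eta T v) n m x y.
Proof.
  intros Hnm H. destruct (bond_exists (eta T v) n m x Hnm) as [y' Hy'].
  replace y with y'; auto. apply Cset_eq, (anc_unique T v _ _ (proj1_sig x)); auto.
  - apply bond_anc; auto.
  - rewrite !Cset_depth; auto.
Qed.

Lemma inSub_anc c c' x : anc T v c c' -> inSub T v c' x -> inSub T v c x.
Proof. destruct x; simpl; intros; eapply anc_trans; eauto. Qed.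

Lemma inSub_bond n m (x : Cset T v m) (y : Cset T v n) p :
  bond (eta T v) n m x y -> inSub T v (proj1_sig x) p -> inSub T v (proj1_sig y) p.
Proof. intros H1 H2. eapply inSub_anc; [apply bond_anc; eauto|auto]. Qed.

Lemma inSub_vpt_bond n m (x : Cset T v m) (y : Cset T v n) :
  bond (eta T v) n m x y -> inSub T v (proj1_sig y) (proj1_sig (vpt T v (proj1_sig x))).
Proof. intros H. eapply inSub_bond; [exact H|]. apply anc_refl. Qed.

Lemma label_Cset_proof k (y : pt T v) : INR (S k) <= height T v (proj1_sig y) ->
  gdistR (tadj T) v (label T v k (proj1_sig y)) (S k).
Proof. intros H. apply gdistR_depth, depth_label; auto. apply proj2_sig. Qed.

Definition label_Cset k (y : pt T v) (H : INR (S k) <= height T v (proj1_sig y)) : Cset T v k :=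
  exist _ (label T v k (proj1_sig y)) (label_Cset_proof k y H).

End Ends.

Section EtaMorphisms.
Variables (T : Tree) (v : tV T) (T' : Tree) (w : tV T').

Lemma IsEtaMor_label f m k (c : Cset T v (mPhi m k)) x : IsEtaMor T v T' w f m ->
  inSub T v (proj1_sig c) (proj1_sig x) -> proj1_sig (mf m k c) = label T' w k (proj1_sig (f x)).
Proof.
  intros [_ [_ H3]] Hin. apply inSub_label_eq; [apply proj2_sig|apply H3; auto|apply Cset_depth].
Qed.

Lemma IsEtaMor_vertex f m k m' (x : Cset T v m') (c : Cset T v (mPhi m k)) :
  IsEtaMor T v T' w f m -> bond (eta T v) (mPhi m k) m' x c ->
  proj1_sig (mf m k c) = label T' w k (proj1_sig (f (vpt T v (proj1_sig x)))).
Proof. intros HE B. apply IsEtaMor_label; auto. eapply inSub_vpt_bond; eauto. Qed.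

Lemma IsEtaMor_IsMor f m : IsEtaMor T v T' w f m -> IsMor m.
Proof.
  intros HE n n' Hn. exists (Nat.max (mPhi m n) (mPhi m n')). split; [lia|split; [lia|]].
  intros x y1 y2 z B1 B2 B3. apply Cset_eq.
  rewrite (IsEtaMor_vertex f m n _ x y1 HE B1).
  symmetry. apply inSub_label_eq; [apply proj2_sig| |apply Cset_depth].
  eapply inSub_bond; [exact B3|]. destruct HE as [_ [_ H3]]. apply H3.
  eapply inSub_vpt_bond; eauto.
Qed.

Lemma eta_homotopy_invariant (f g : pt T v -> pt T' w) m m' :
  rmp_homotopic T v T' w f g ->
  IsEtaMor T v T' w f m -> IsEtaMor T v T' w g m' -> mor_eq m m'.
Proof.
  intros [H [H0 [H1 [_ [Hcont Hprop]]]]] Hm Hm' n.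
  destruct (Hprop (INR (S n))) as [N [HN HNp]]; [apply lt_0_INR; lia|].
  destruct (exists_nat_gt N) as [L0 HL0].
  exists (Nat.max (Nat.max (mPhi m n) (mPhi m' n)) L0). split; [lia|split; [lia|]].
  intros x y1 y2 B1 B2. apply Cset_eq.
  rewrite (IsEtaMor_vertex f m n _ x y1 Hm B1), (IsEtaMor_vertex g m' n _ x y2 Hm' B2).
  set (X := vpt T v (proj1_sig x)). rewrite <- H0, <- H1.
  assert (Hh : forall s, 0 <= s <= 1 -> INR (S n) <= height T' w (proj1_sig (H X s))).
  { intros s Hs. destruct (Rle_dec (INR (S n)) (height T' w (proj1_sig (H X s)))) as [Hle|Hlt];
      auto. exfalso.
    assert (Hx := HNp X s Hs ltac:(rewrite pdist_root; lra)).
    rewrite pdist_root in Hx. unfold X in Hx. simpl in Hx. rewrite Cset_depth in Hx.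
    pose proof (le_INR _ _ (Nat.le_max_r (Nat.max (mPhi m n) (mPhi m' n)) L0)).
    rewrite S_INR in Hx. lra. }
  symmetry. apply (locally_constant_interval (fun s => label T' w n (proj1_sig (H X s))) 0 1);
    [lra|].
  intros s Hs. destruct (Hcont X s 2 Hs) as [d [Hd Hdd]]; [lra|].
  exists d; split; auto. intros s' Hs' Hss'.
  symmetry. apply label_close; try apply proj2_sig; try apply Hh; auto.
  rewrite <- pdist_tdist. apply Hdd; auto. rewrite pdist_tdist, tdist_self; auto. apply proj2_sig.
Qed.

End EtaMorphisms.

Lemma eta_id (T : Tree) (v : tV T) m :
  IsEtaMor T v T v (fun x => x) m -> mor_eq m (mor_id (eta T v)).
Proof.
  intros HE n. exists (Nat.max (mPhi m n) n). split; [lia|split; [simpl; lia|]].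
  intros x y1 y2 B1 B2. simpl in *. apply Cset_eq.
  rewrite (IsEtaMor_vertex T v T v _ m n _ x y1 HE B1).
  symmetry. apply inSub_label_eq; [apply proj2_sig|apply inSub_vpt_bond; auto|apply Cset_depth].
Qed.

Lemma eta_comp (T1 : Tree) (v1 : tV T1) (T2 : Tree) (v2 : tV T2) (T3 : Tree) (v3 : tV T3)
  (f : pt T1 v1 -> pt T2 v2) (g : pt T2 v2 -> pt T3 v3) m1 m2 m3 :
  IsEtaMor T1 v1 T2 v2 f m1 -> IsEtaMor T2 v2 T3 v3 g m2 ->
  IsEtaMor T1 v1 T3 v3 (fun x => g (f x)) m3 -> mor_eq m3 (mor_comp m1 m2).
Proof.
  intros H1 H2 H3 n. exists (Nat.max (mPhi m3 n) (mPhi m1 (mPhi m2 n))).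
  split; [lia|split; [simpl; lia|]].
  intros x y1 y2 B1 B2. simpl in *. apply Cset_eq.
  rewrite (IsEtaMor_vertex _ _ _ _ _ m3 n _ x y1 H3 B1).
  rewrite (IsEtaMor_label _ _ _ _ _ m2 n _ (f (vpt T1 v1 (proj1_sig x))) H2); [reflexivity|].
  destruct H1 as [_ [_ H1]]. apply H1, inSub_vpt_bond; auto.
Qed.

Fixpoint strict_hull (N : nat -> nat) (k : nat) : nat :=
  match k with
  | O => N O
  | S k' => Nat.max (S (strict_hull N k')) (N (S k'))
  end.

Lemma strict_hull_ge N k : (N k <= strict_hull N k)%nat.
Proof. destruct k; cbn [strict_hull]; lia. Qed.

Lemma strict_hull_lt N k : (strict_hull N k < strict_hull N (S k))%nat.
Proof. cbn [strict_hull]; lia. Qed.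

Lemma proper_height_bound (T : Tree) (v : tV T) (T' : Tree) (w : tV T') (f : pt T v -> pt T' w) :
  (forall P, Defs.bounded T' w P -> Defs.bounded T v (fun x => P (f x))) ->
  forall r, exists N : nat, forall x, height T' w (proj1_sig (f x)) < r ->
                                      height T v (proj1_sig x) < INR N.
Proof.
  intros Hprop r.
  destruct (Hprop (fun y => height T' w (proj1_sig y) < r)) as [c0 [r0 Hc0]].
  { exists (vpt T' w w), r. intros y Hy. rewrite pdist_root. auto. }
  destruct (exists_nat_gt (height T v (proj1_sig c0) + r0)) as [N HN]. exists N. intros x Hx.
  apply Hc0 in Hx. rewrite pdist_tdist in Hx.
  pose proof (tdist_height T v (proj1_sig c0) (proj1_sig x)). rmin_solve.
Qed.

Section Existence.
Variables (T : Tree) (v : tV T) (T' : Tree) (w : tV T') (f : pt T v -> pt T' w).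
Hypothesis f_cont : forall x eps, 0 < eps -> exists delta, 0 < delta /\
  forall y, pdist T v x y < delta -> pdist T' w (f x) (f y) < eps.
Variable Phi : nat -> nat.
Hypothesis Phi_lt : forall k, (Phi k < Phi (S k))%nat.
Hypothesis Phi_bound : forall k x,
  height T' w (proj1_sig (f x)) < INR (S k) -> height T v (proj1_sig x) < INR (Phi k).

Lemma height_image_ge k x :
  INR (Phi k) <= height T v (proj1_sig x) -> INR (S k) <= height T' w (proj1_sig (f x)).
Proof.
  intros Hx. destruct (Rle_dec (INR (S k)) (height T' w (proj1_sig (f x)))) as [H|H]; auto.
  apply Rnot_le_lt, Phi_bound in H. lra.
Qed.

Lemma height_image_vertex k (c : Cset T v (Phi k)) :
  INR (S k) <= height T' w (proj1_sig (f (vpt T v (proj1_sig c)))).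
Proof. apply height_image_ge. simpl. rewrite Cset_depth. apply le_INR; lia. Qed.

(* the arc from [x] down to [c] stays above height [Phi k], so its image stays above [k + 1] *)
Lemma label_image_subtree k (c : Cset T v (Phi k)) x : inSub T v (proj1_sig c) (proj1_sig x) ->
  label T' w k (proj1_sig (f x)) = label T' w k (proj1_sig (f (vpt T v (proj1_sig c)))).
Proof.
  intros Hin. assert (Vx := proj2_sig x).
  pose proof (inSub_height T v _ _ Vx Hin) as Hcx. rewrite Cset_depth in Hcx.
  set (a := INR (S (Phi k))) in *. set (b := height T v (proj1_sig x)) in *.
  assert (Ea : retractP T v a x = vpt T v (proj1_sig c)).
  { apply pt_eq. simpl. unfold a.
    assert (E : INR (S (Phi k)) = INR (depth T v (proj1_sig c))) by (rewrite Cset_depth; auto).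
    rewrite E. apply retract_inSub; auto. }
  assert (Eb : retractP T v b x = x) by (apply pt_eq, retract_height; unfold b; auto; lra).
  rewrite <- Ea. rewrite <- Eb at 1.
  assert (Ha : INR (Phi k) <= a) by (apply le_INR; lia).
  apply (locally_constant_interval (fun r => label T' w k (proj1_sig (f (retractP T v r x)))) a b);
    [lra|].
  assert (Hfar : forall r, a <= r <= b ->
                         INR (S k) <= height T' w (proj1_sig (f (retractP T v r x)))).
  { intros r Hr. apply height_image_ge. simpl. rewrite height_retract by auto.
    pose proof (pos_INR (Phi k)). unfold b in Hr. rmin_solve. }
  intros r Hr. destruct (f_cont (retractP T v r x) 2) as [d [Hd Hdd]]; [lra|].
  exists d; split; auto. intros r' Hr' Hrr.
  symmetry. apply label_close; try apply proj2_sig; try apply Hfar; auto.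
  rewrite <- pdist_tdist. apply Hdd. rewrite pdist_tdist. simpl.
  eapply Rle_lt_trans; [apply tdist_retract; auto|]. rewrite tdist_self by auto. lra.
Qed.

Definition eta_rep : mor (eta T v) (eta T' w) :=
  {| mPhi := Phi;
     mf := fun k (c : tX (eta T v) (Phi k)) =>
             label_Cset T' w k (f (vpt T v (proj1_sig c))) (height_image_vertex k c)
             : tX (eta T' w) k |}.

Lemma eta_rep_IsEtaMor : IsEtaMor T v T' w f eta_rep.
Proof.
  split; [|split]; [exact Phi_lt| |].
  - intros k x Hx. rewrite pdist_root in Hx |- *. apply Phi_bound in Hx.
    pose proof (le_INR _ _ (Nat.le_succ_diag_r (Phi k))). simpl mPhi. lra.
  - intros k c x Hin. change (mPhi eta_rep k) with (Phi k) in *. simpl.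
    rewrite <- (label_image_subtree k c x) by auto.
    apply inSub_label; [apply proj2_sig|]. apply height_image_ge.
    pose proof (inSub_height T v _ _ (proj2_sig x) Hin). rewrite Cset_depth in H.
    pose proof (le_INR _ _ (Nat.le_succ_diag_r (Phi k))). lra.
Qed.

End Existence.

Lemma eta_exists (T : Tree) (v : tV T) (T' : Tree) (w : tV T') (f : pt T v -> pt T' w) :
  RCP T v T' w f -> exists m, IsEtaMor T v T' w f m /\ IsMor m.
Proof.
  intros [Hcont [Hprop _]].
  destruct (choice (fun k N => forall x, height T' w (proj1_sig (f x)) < INR (S k) ->
                                        height T v (proj1_sig x) < INR N))
    as [N HN]; [intros k; apply proper_height_bound; auto|].
  set (Phi := strict_hull N).
  assert (Hbound : forall k x, height T' w (proj1_sig (f x)) < INR (S k) ->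
                              height T v (proj1_sig x) < INR (Phi k)).
  { intros k x Hx. apply HN in Hx. pose proof (le_INR _ _ (strict_hull_ge N k)). unfold Phi; lra. }
  pose proof (eta_rep_IsEtaMor T v T' w f Hcont Phi (strict_hull_lt N) Hbound) as HE.
  eexists; split; [exact HE|]. eapply IsEtaMor_IsMor; eauto.
Qed.

Section BranchPath.
Variables (T : Tree) (v : tV T).
Notation valid := (valid T v).
Notation height := (height T v).
Notation gprod := (gprod T v).
Notation tdist := (tdist T v).
Notation retract := (retract T v).

Lemma gprod_lipschitz A B A' B' : Rabs (gprod A B - gprod A' B') <= tdist A A' + tdist B B'.
Proof.
  pose proof (tdist_height T v A A'). pose proof (tdist_height T v B B').
  pose proof (tdist_triangle T v A B A'). pose proof (tdist_triangle T v A' B B').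
  pose proof (tdist_triangle T v A' B' A). pose proof (tdist_triangle T v A B' B).
  pose proof (tdist_sym T v A' A). pose proof (tdist_sym T v B' B).
  unfold tdist in *. rmin_solve.
Qed.

(* For [s] in [[0, 1/2]] the path descends at constant speed from [A] to the branch point of
   the arcs [[v, A]] and [[v, B]], then for [s] in [[1/2, 1]] it climbs from there to [B]. *)
Definition branch_path (A B : raw (tV T)) (s : R) : raw (tV T) :=
  if Rle_dec s (1/2) then retract ((1 - 2*s) * height A + 2 * s * gprod A B) A
  else retract ((2 - 2*s) * gprod A B + (2*s - 1) * height B) B.

Lemma branch_path_valid A B s : valid A -> valid B -> valid (branch_path A B s).
Proof. intros; unfold branch_path; destruct Rle_dec; apply retract_valid; auto. Qed.

Lemma branch_path_0 A B : valid A -> branch_path A B 0 = A.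
Proof.
  intros VA. unfold branch_path. destruct Rle_dec; [|lra]. apply retract_height; auto; lra.
Qed.

Lemma branch_path_1 A B : valid B -> branch_path A B 1 = B.
Proof.
  intros VB. unfold branch_path. destruct Rle_dec; [lra|]. apply retract_height; auto; lra.
Qed.

Lemma branch_path_root s : branch_path (PV v) (PV v) s = PV v.
Proof. unfold branch_path. destruct Rle_dec; apply retract_root. Qed.

Lemma branch_path_sym A B s : valid A -> valid B -> branch_path A B s = branch_path B A (1 - s).
Proof.
  intros VA VB. unfold branch_path. rewrite (gprod_sym T v B A).
  destruct (Rle_dec s (1/2)) as [L1|L1]; destruct (Rle_dec (1 - s) (1/2)) as [L2|L2].
  - assert (s = 1/2) by lra. subst s.
    apply (tdist_eq0 T v); try apply retract_valid; auto.
    replace ((1 - 2 * (1/2)) * height A + 2 * (1/2) * gprod A B) with (gprod A B) by field.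
    replace ((1 - 2 * (1 - 1/2)) * height B + 2 * (1 - 1/2) * gprod A B) with (gprod A B) by field.
    apply retract_gprod; auto.
  - f_equal. ring.
  - f_equal. ring.
  - lra.
Qed.

Lemma branch_height A B s :
  valid A -> valid B -> 0 <= s <= 1 -> gprod A B <= height (branch_path A B s).
Proof.
  intros VA VB Hs. pose proof (gprod_le_l T v A B). pose proof (gprod_le_r T v A B).
  pose proof (gprod_nonneg T v A B VA VB).
  unfold branch_path. destruct Rle_dec; rewrite height_retract by auto.
  - assert (gprod A B <= (1 - 2*s) * height A + 2 * s * gprod A B) by nra. rmin_solve.
  - assert (gprod A B <= (2 - 2*s) * gprod A B + (2*s - 1) * height B) by nra. rmin_solve.
Qed.

Lemma branch_path_lipschitz_left Ax Bx Ay By s s' :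
  valid Ax -> valid Bx -> valid Ay -> valid By -> 0 <= s <= 1/2 -> 0 <= s' <= 1 ->
  tdist (branch_path Ax Bx s) (branch_path Ay By s') <=
  4 * (tdist Ax Ay + tdist Bx By)
  + 4 * Rabs (s - s') * (height Ax + height Bx + tdist Ax Ay + tdist Bx By).
Proof.
  intros VAx VBx VAy VBy Hs Hs'.
  set (a := tdist Ax Ay). set (b := tdist Bx By). set (sg := Rabs (s - s')).
  set (p := gprod Ax Bx). set (p' := gprod Ay By).
  assert (Ha : 0 <= a) by apply tdist_nonneg. assert (Hb : 0 <= b) by apply tdist_nonneg.
  assert (Hsg1 : s - s' <= sg) by apply Rle_abs.
  assert (Hsg2 : s' - s <= sg) by (unfold sg; rewrite Rabs_minus_sym; apply Rle_abs).
  pose proof (tdist_height T v Ax Ay) as HhA. pose proof (tdist_height T v Bx By) as HhB.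
  pose proof (gprod_lipschitz Ax Bx Ay By) as Hp. fold a b p p' in HhA, HhB, Hp.
  apply Rabs_le_bounds in HhA, HhB, Hp.
  assert (Hp1 : 0 <= p) by (apply gprod_nonneg; auto).
  assert (Hp1' : 0 <= p') by (apply gprod_nonneg; auto).
  assert (Hp2 : p <= height Ax) by apply gprod_le_l.
  assert (Hp3 : p <= height Bx) by apply gprod_le_r.
  assert (Hp2' : p' <= height Ay) by apply gprod_le_l.
  assert (Hp3' : p' <= height By) by apply gprod_le_r.
  assert (Hsg0 : 0 <= sg) by apply Rabs_pos.
  unfold branch_path. fold p p'.
  destruct (Rle_dec s (1/2)) as [_|]; [|lra]. destruct (Rle_dec s' (1/2)) as [L2|L2].
  - eapply Rle_trans; [apply tdist_retract; auto|]. fold a.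
    assert (Rabs (((1 - 2*s) * height Ax + 2 * s * p) - ((1 - 2*s') * height Ay + 2 * s' * p'))
            <= 2*a + b + 2*sg*(height Ax + a)) by (apply Rabs_le; split; nra).
    nra.
  - (* pass through the branch point [retract p Ax = retract p Bx] *)
    eapply Rle_trans; [apply tdist_triangle with (z := retract p Ax)|].
    eapply Rle_trans; [apply Rplus_le_compat_l, tdist_triangle with (z := retract p Bx)|].
    pose proof (tdist_retract T v ((1 - 2*s) * height Ax + 2 * s * p) p Ax Ax VAx VAx).
    rewrite tdist_self in H by auto.
    pose proof (retract_gprod T v Ax Bx VAx VBx). fold p in H0.
    pose proof (tdist_retract T v p ((2 - 2*s') * p' + (2*s' - 1) * height By) Bx By VBx VBy).
    fold b in H1.
    assert (Rabs (((1 - 2*s) * height Ax + 2 * s * p) - p) <= 2 * sg * height Ax)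
      by (apply Rabs_le; split; nra).
    assert (Rabs (p - ((2 - 2*s') * p' + (2*s' - 1) * height By))
            <= a + b + 2 * sg * (height Bx + b))
      by (apply Rabs_le; split; nra).
    nra.
Qed.

Lemma branch_path_lipschitz Ax Bx Ay By s s' :
  valid Ax -> valid Bx -> valid Ay -> valid By -> 0 <= s <= 1 -> 0 <= s' <= 1 ->
  tdist (branch_path Ax Bx s) (branch_path Ay By s') <=
  4 * (tdist Ax Ay + tdist Bx By)
  + 4 * Rabs (s - s') * (height Ax + height Bx + tdist Ax Ay + tdist Bx By).
Proof.
  intros VAx VBx VAy VBy Hs Hs'.
  destruct (Rle_dec s (1/2)); [apply branch_path_lipschitz_left; auto; lra|].
  rewrite (branch_path_sym Ax), (branch_path_sym Ay) by auto.
  replace (Rabs (s - s')) with (Rabs ((1 - s) - (1 - s')))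
    by (rewrite Rabs_minus_sym; f_equal; ring).
  replace (height Ax + height Bx + tdist Ax Ay + tdist Bx By)
    with (height Bx + height Ax + tdist Bx By + tdist Ax Ay) by ring.
  rewrite (Rplus_comm (tdist Ax Ay)). apply branch_path_lipschitz_left; auto; lra.
Qed.

End BranchPath.

Section Faithfulness.
Variables (T : Tree) (v : tV T) (T' : Tree) (w : tV T') (f g : pt T v -> pt T' w).

Definition branch_homotopy (x : pt T v) (s : R) : pt T' w :=
  if Rle_dec s 0 then f x else if Rle_dec 1 s then g x else
  exist _ (branch_path T' w (proj1_sig (f x)) (proj1_sig (g x)) s)
    (branch_path_valid T' w _ _ s (proj2_sig (f x)) (proj2_sig (g x))).

Lemma branch_homotopy_val x s : 0 <= s <= 1 ->
  proj1_sig (branch_homotopy x s) = branch_path T' w (proj1_sig (f x)) (proj1_sig (g x)) s.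
Proof.
  intros Hs. unfold branch_homotopy. destruct (Rle_dec s 0).
  - replace s with 0 by lra. rewrite branch_path_0; auto. apply proj2_sig.
  - destruct (Rle_dec 1 s); [|reflexivity].
    replace s with 1 by lra. rewrite branch_path_1; auto. apply proj2_sig.
Qed.

Hypothesis f_cont : forall x eps, 0 < eps -> exists delta, 0 < delta /\
  forall y, pdist T v x y < delta -> pdist T' w (f x) (f y) < eps.
Hypothesis g_cont : forall x eps, 0 < eps -> exists delta, 0 < delta /\
  forall y, pdist T v x y < delta -> pdist T' w (g x) (g y) < eps.

Lemma branch_homotopy_continuous x s eps : 0 <= s <= 1 -> 0 < eps ->
  exists delta, 0 < delta /\ forall y s', 0 <= s' <= 1 -> pdist T v x y < delta ->
    Rabs (s - s') < delta -> pdist T' w (branch_homotopy x s) (branch_homotopy y s') < eps.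
Proof.
  intros Hs Heps.
  set (A := proj1_sig (f x)). set (B := proj1_sig (g x)).
  set (K := height T' w A + height T' w B + 2).
  assert (HK : 2 <= K) by (unfold K; pose proof (height_nonneg T' w A (proj2_sig (f x)));
                             pose proof (height_nonneg T' w B (proj2_sig (g x))); lra).
  set (e1 := Rmin 1 (eps / 32)).
  assert (He1 : 0 < e1 /\ e1 <= 1 /\ e1 <= eps / 32) by (unfold e1; rmin_solve).
  destruct (f_cont x e1) as [df [Hdf Hf]]; [lra|].
  destruct (g_cont x e1) as [dg [Hdg Hg]]; [lra|].
  set (ds := eps / (16 * K)).
  assert (Hds : 0 < ds) by (unfold ds; apply Rdiv_lt_0_compat; lra).
  exists (Rmin (Rmin df dg) ds). split; [rmin_solve|].
  intros y s' Hs' Hxy Hss.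
  assert (Pf : pdist T v x y < df) by rmin_solve.
  assert (Pg : pdist T v x y < dg) by rmin_solve.
  assert (Ps : Rabs (s - s') < ds) by rmin_solve.
  apply Hf in Pf. apply Hg in Pg.
  rewrite pdist_tdist in Pf, Pg |- *. rewrite !branch_homotopy_val by auto.
  eapply Rle_lt_trans; [apply branch_path_lipschitz; auto; apply proj2_sig|].
  fold A B in Pf, Pg |- *.
  set (a := tdist T' w A (proj1_sig (f y))) in *. set (b := tdist T' w B (proj1_sig (g y))) in *.
  set (sg := Rabs (s - s')) in *.
  assert (Ha : 0 <= a) by apply tdist_nonneg. assert (Hb : 0 <= b) by apply tdist_nonneg.
  assert (Hsg : 0 <= sg) by apply Rabs_pos.
  assert (Hst : sg * (16 * K) <= eps).
  { unfold ds in Ps. apply Rlt_le in Ps. apply (Rmult_le_compat_r (16 * K)) in Ps; [|lra].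
    unfold Rdiv in Ps. rewrite Rmult_assoc, Rinv_l in Ps by lra. lra. }
  assert (height T' w A + height T' w B + a + b <= K) by (unfold K; lra).
  assert (sg * (height T' w A + height T' w B + a + b) <= sg * K) by (apply Rmult_le_compat_l; lra).
  lra.
Qed.

(* Deep points are sent by [f] and [g] below the same vertex of depth [n + 1], so the branch
   point of [f x] and [g x], and with it the whole track of [x], stays at height [>= n + 1]. *)
Lemma branch_homotopy_proper m m' :
  IsEtaMor T v T' w f m -> IsEtaMor T v T' w g m' -> mor_eq m m' ->
  forall M, 0 < M -> exists N, 0 < N /\ forall x s, 0 <= s <= 1 ->
    pdist T' w (vpt T' w w) (branch_homotopy x s) < M -> pdist T v (vpt T v v) x < N.
Proof.
  intros Hm Hm' Heq M HM. destruct (exists_nat_gt M) as [n Hn].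
  destruct (Heq n) as [L [HL1 [HL2 HL]]].
  exists (INR (S L) + 1). split; [pose proof (pos_INR (S L)); lra|].
  intros x s Hs Hx. rewrite pdist_root.
  destruct (Rlt_le_dec (height T v (proj1_sig x)) (INR (S L))) as [Hlt|Hge]; [lra|]. exfalso.
  set (c := label_Cset T v L x Hge).
  assert (Hc : inSub T v (proj1_sig c) (proj1_sig x)) by (apply inSub_label; auto; apply proj2_sig).
  destruct (bond_exists (eta T v) (mPhi m n) L c HL1) as [y1 B1].
  destruct (bond_exists (eta T v) (mPhi m' n) L c HL2) as [y2 B2].
  specialize (HL c y1 y2 B1 B2).
  destruct Hm as [_ [_ Hm3]], Hm' as [_ [_ Hm3']].
  pose proof (Hm3 n y1 x (inSub_bond T v _ _ _ _ _ B1 Hc)) as I1.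
  pose proof (Hm3' n y2 x (inSub_bond T v _ _ _ _ _ B2 Hc)) as I2. rewrite <- HL in I2.
  pose proof (inSub_gprod_le T' w _ _ _ (proj2_sig (f x)) (proj2_sig (g x)) I1 I2) as Hp.
  rewrite Cset_depth in Hp.
  pose proof (branch_height T' w _ _ s (proj2_sig (f x)) (proj2_sig (g x)) Hs) as Hb.
  rewrite <- branch_homotopy_val in Hb by auto. rewrite pdist_root in Hx.
  pose proof (le_INR _ _ (Nat.le_succ_diag_r n)). lra.
Qed.

End Faithfulness.

Lemma eta_faithful (T : Tree) (v : tV T) (T' : Tree) (w : tV T') (f g : pt T v -> pt T' w) m m' :
  RCP T v T' w f -> RCP T v T' w g ->
  IsEtaMor T v T' w f m -> IsEtaMor T v T' w g m' -> mor_eq m m' ->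
  rmp_homotopic T v T' w f g.
Proof.
  intros [Cf [_ Rf]] [Cg [_ Rg]] Hm Hm' Heq.
  exists (branch_homotopy T v T' w f g). split; [|split; [|split; [|split]]].
  - intros x. unfold branch_homotopy. destruct (Rle_dec 0 0); [auto|lra].
  - intros x. unfold branch_homotopy. destruct (Rle_dec 1 0); [lra|].
    destruct (Rle_dec 1 1); [auto|lra].
  - intros s Hs. rewrite branch_homotopy_val, Rf, Rg by auto. apply branch_path_root.
  - intros x s eps Hs Heps. apply branch_homotopy_continuous; auto.
  - eapply branch_homotopy_proper; eauto.
Qed.

Lemma chain_nth {V} (adj : V -> V -> Prop) x0 l d : chain adj x0 l ->
  forall i, (i < length l)%nat -> adj (nth i (x0 :: l) d) (nth (S i) (x0 :: l) d).
Proof.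
  revert x0; induction l as [|y l IH]; intros x0 H i Hi; simpl in *; [lia|].
  destruct H as [H1 H2]. destruct i as [|i]; simpl; auto.
  apply (IH y H2 i). lia.
Qed.

Lemma last_nth {V} (l : list V) x0 d : last l x0 = nth (length l) (x0 :: l) d.
Proof.
  revert x0; induction l as [|y l IH]; intros x0; simpl; auto.
  rewrite IH. destruct l; simpl; auto.
Qed.

Lemma exists_argmax (F : nat -> nat) N : (0 < N)%nat ->
  exists k, (k < N)%nat /\ forall j, (j < N)%nat -> (F j <= F k)%nat.
Proof.
  induction N as [|N IH]; intros HN; [lia|]. destruct N as [|N].
  - exists 0%nat; split; [lia|]. intros j Hj. replace j with 0%nat by lia. lia.
  - destruct IH as [k [Hk Hkm]]; [lia|].
    destruct (le_lt_dec (F (S N)) (F k)) as [L|L].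
    + exists k; split; [lia|]. intros j Hj.
      destruct (Nat.eq_dec j (S N)); [subst; lia|]. apply Hkm; lia.
    + exists (S N); split; [lia|]. intros j Hj.
      destruct (Nat.eq_dec j (S N)); [subst; lia|]. specialize (Hkm j ltac:(lia)); lia.
Qed.

(* A deepest vertex of a cycle would have two distinct neighbours, both equal to its parent. *)
Lemma no_cycle_of_levels {V} (adj : V -> V -> Prop) (level : V -> nat) (par : V -> V) :
  (forall a b, adj a b -> (level b = S (level a) /\ a = par b) \/
                          (level a = S (level b) /\ b = par a)) ->
  ~ has_cycle adj.
Proof.
  intros Hadj [x0 [l [Hlen [Hnd [Hch Hlast]]]]].
  set (c := x0 :: l). set (N := length c).
  set (E := fun i => nth i c x0).
  set (nxt := fun i => if Nat.eqb i (N - 1) then 0%nat else S i).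
  assert (Hnx : forall i, (i < N)%nat -> adj (E i) (E (nxt i))).
  { intros i Hi. unfold nxt. destruct (Nat.eqb_spec i (N - 1)) as [Ei|Ei].
    - unfold E, c. replace i with (length l) by (unfold N, c in *; simpl in *; lia).
      rewrite <- last_nth. exact Hlast.
    - unfold E, c. apply chain_nth; auto. unfold N, c in *; simpl in *; lia. }
  destruct (exists_argmax (fun i => level (E i)) N) as [k [Hk Hkm]]; [unfold N, c; simpl; lia|].
  set (pi := if Nat.eqb k 0 then (N - 1)%nat else (k - 1)%nat).
  assert (Hpi1 : (pi < N)%nat) by (unfold pi; destruct (Nat.eqb_spec k 0); lia).
  assert (Hpi2 : nxt pi = k).
  { unfold pi, nxt. destruct (Nat.eqb_spec k 0) as [e|e].
    - rewrite Nat.eqb_refl. lia.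
    - destruct (Nat.eqb_spec (k - 1) (N - 1)); lia. }
  assert (Hsi : (nxt k < N)%nat) by (unfold nxt; destruct (Nat.eqb_spec k (N - 1)); lia).
  assert (P1 := Hnx pi Hpi1). rewrite Hpi2 in P1.
  assert (Q1 : E pi = par (E k)).
  { destruct (Hadj _ _ P1) as [[_ H]|[H _]]; auto. specialize (Hkm pi Hpi1). simpl in Hkm. lia. }
  assert (Q2 : E (nxt k) = par (E k)).
  { destruct (Hadj _ _ (Hnx k Hk)) as [[H _]|[_ H]]; auto.
    specialize (Hkm (nxt k) Hsi). simpl in Hkm. lia. }
  assert (Hne : pi <> nxt k).
  { unfold pi, nxt. destruct (Nat.eqb_spec k 0); destruct (Nat.eqb_spec k (N - 1));
      unfold N, c in *; simpl in *; lia. }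
  apply Hne. eapply (proj1 (NoDup_nth c x0)); eauto. unfold E in Q1, Q2. congruence.
Qed.

Section TowerTree.
Variable A : tower.
Open Scope nat_scope.

(* vertices: a root [None] and the elements of the [X_n]; [x] in [X_0] hangs from the root *)
Definition tower_vertex : Type := option {n : nat & tX A n}.

Definition tower_child (a b : tower_vertex) : Prop :=
  (a = None /\ exists x : tX A 0, b = Some (existT _ 0 x)) \/
  (exists n (x : tX A (S n)), a = Some (existT _ n (tp A n x)) /\ b = Some (existT _ (S n) x)).

Definition tower_adj (a b : tower_vertex) : Prop := tower_child a b \/ tower_child b a.

Definition tower_level (a : tower_vertex) : nat :=
  match a with None => 0 | Some (existT _ n _) => S n end.

Definition tower_parent (a : tower_vertex) : tower_vertex :=
  match a with
  | None => None
  | Some (existT _ 0 _) => None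
  | Some (existT _ (S n) x) => Some (existT _ n (tp A n x))
  end.

Lemma tower_child_level a b :
  tower_child a b -> tower_level b = S (tower_level a) /\ a = tower_parent b.
Proof. intros [[-> [x ->]]|[n [x [-> ->]]]]; simpl; auto. Qed.

Lemma tower_adj_sym a b : tower_adj a b -> tower_adj b a.
Proof. unfold tower_adj; tauto. Qed.

Lemma tower_adj_irr a : ~ tower_adj a a.
Proof. intros [H|H]; apply tower_child_level in H as [H _]; lia. Qed.

Lemma tower_adj_cases a b : tower_adj a b ->
  (tower_level b = S (tower_level a) /\ a = tower_parent b) \/
  (tower_level a = S (tower_level b) /\ b = tower_parent a).
Proof. intros [H|H]; apply tower_child_level in H; tauto. Qed.

Lemma walk_from_root a : walk tower_adj None a (tower_level a).
Proof.
  destruct a as [[n x]|]; simpl; [|constructor].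
  revert x; induction n; intros x.
  - apply walkS with None; [constructor|]. left; left; eauto.
  - apply walkS with (Some (existT _ n (tp A n x))); auto. left; right; eauto.
Qed.

Lemma tower_level_walk a b n : walk tower_adj a b n -> tower_level b <= tower_level a + n.
Proof.
  intros H; induction H as [|b c n H IH Hbc]; [lia|].
  destruct (tower_adj_cases _ _ Hbc) as [[E _]|[E _]]; lia.
Qed.

Definition tower_tree : Tree := {|
  tV := tower_vertex; tadj := tower_adj; tadj_sym := tower_adj_sym; tadj_irr := tower_adj_irr;
  tconn := fun a b => ex_intro _ _
    (walk_app (walk_rev tower_adj_sym (walk_from_root a)) (walk_from_root b));
  tacyc := no_cycle_of_levels tower_adj tower_level tower_parent tower_adj_cases |}.

Lemma tower_tree_dist z : gdistR (tadj tower_tree) None z (tower_level z).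
Proof.
  split; [apply walk_from_root|]. intros m W. apply tower_level_walk in W. simpl in W. lia.
Qed.

Lemma tower_tree_depth z : depth tower_tree None z = tower_level z.
Proof. apply gdist_unique, tower_tree_dist. Qed.

Definition tower_to_ends : mor A (eta tower_tree None) :=
  {| mPhi := fun n => n;
     mf := fun n x => exist _ (Some (existT _ n x)) (tower_tree_dist (Some (existT _ n x)))
                      : tX (eta tower_tree None) n |}.

Lemma Cset_tower_vertex n (c : Cset tower_tree None n) :
  exists x : tX A n, proj1_sig c = Some (existT _ n x).
Proof.
  destruct c as [z Hz]. simpl. apply gdist_unique in Hz.
  rewrite (gdist_unique _ _ _ _ (tower_tree_dist z)) in Hz.
  destruct z as [[m x]|]; simpl in *; [|lia].
  injection Hz as ->. exists x; auto.
Qed.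

Definition ends_to_tower : mor (eta tower_tree None) A :=
  {| mPhi := fun n => n;
     mf := fun n (c : tX (eta tower_tree None) n) =>
             proj1_sig (constructive_indefinite_description _ (Cset_tower_vertex n c)) |}.

Lemma ends_to_tower_spec n c : proj1_sig c = Some (existT _ n (mf ends_to_tower n c)).
Proof. exact (proj2_sig (constructive_indefinite_description _ (Cset_tower_vertex n c))). Qed.

Lemma ends_to_tower_to_ends n x : mf ends_to_tower n (mf tower_to_ends n x) = x.
Proof.
  pose proof (ends_to_tower_spec n (mf tower_to_ends n x)) as H. simpl in H. injection H as H.
  apply inj_pair2_eq_dec in H; [auto|exact Nat.eq_dec].
Qed.

Lemma tower_to_ends_to_tower n c : mf tower_to_ends n (mf ends_to_tower n c) = c.
Proof. apply Cset_eq. simpl. symmetry. apply ends_to_tower_spec. Qed.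

Lemma bond_tower_to_ends n m x y :
  bond A n m x y -> bond (eta tower_tree None) n m (mf tower_to_ends m x) (mf tower_to_ends n y).
Proof.
  intros H; induction H; constructor.
  change (tp (eta tower_tree None) m (mf tower_to_ends (S m) x))
    with (parent tower_tree None m (mf tower_to_ends (S m) x)).
  replace (parent tower_tree None m (mf tower_to_ends (S m) x))
    with (mf tower_to_ends m (tp A m x)); auto.
  apply Cset_eq. rewrite parent_val. simpl. apply (parv_unique tower_tree None).
  - left. right. exists m, x. auto.
  - rewrite !tower_tree_depth. reflexivity.
Qed.

Lemma eta_essentially_surjective : exists (T : Tree) (v : tV T), tower_iso A (eta T v).
Proof.
  exists tower_tree, None, tower_to_ends, ends_to_tower. split; [|split; [|split]].
  - intros n n' Hn. exists n'. split; [simpl; lia|split; [simpl; lia|]].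
    intros x y1 y2 z B1 B2 B3. simpl in B2. apply bond_refl_inv in B2. subst y2.
    apply bond_tower_to_ends in B1. eapply bond_fun; eauto.
  - intros n n' Hn. exists n'. split; [simpl; lia|split; [simpl; lia|]].
    intros c y1 y2 z B1 B2 B3. simpl in B2. apply bond_refl_inv in B2. subst y2.
    apply bond_tower_to_ends in B3. rewrite tower_to_ends_to_tower in B3.
    rewrite (bond_fun _ _ _ _ _ _ B1 B3). apply ends_to_tower_to_ends.
  - intros n. exists n. split; [simpl; lia|split; [simpl; lia|]].
    intros x y1 y2 B1 B2. simpl in *. apply bond_refl_inv in B1, B2. subst.
    apply ends_to_tower_to_ends.
  - intros n. exists n. split; [simpl; lia|split; [simpl; lia|]].
    intros x y1 y2 B1 B2. simpl in *. apply bond_refl_inv in B1, B2. subst.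
    apply tower_to_ends_to_tower.
Qed.

End TowerTree.

Section Cells.
Variable T : Tree.

Definition cell_end (x : raw (tV T)) (p : tV T * R) : Prop := p = fst (ends x) \/ p = snd (ends x).

Lemma via_le_leg x y p q : cell_end x p -> cell_end y q -> via T x y <= leg T p q.
Proof.
  unfold via, cell_end. destruct (ends x) as [p1 p2], (ends y) as [q1 q2]. simpl.
  intros [->| ->] [->| ->]; rmin_solve.
Qed.

Lemma via_glb x y z :
  (forall p q, cell_end x p -> cell_end y q -> z <= leg T p q) -> z <= via T x y.
Proof.
  unfold via, cell_end. destruct (ends x) as [p1 p2], (ends y) as [q1 q2]. simpl.
  intros H. repeat apply Rmin_glb; apply H; auto.
Qed.

Lemma rdist_le_via x y : rdist T x y <= via T x y.
Proof.
  unfold rdist. destruct x, y; try apply Rle_refl.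
  destruct excluded_middle_informative; [apply Rmin_r|apply Rle_refl].
Qed.

Lemma rdist_glb x y z : (forall p q, cell_end x p -> cell_end y q -> z <= leg T p q) ->
  (forall a b t s, x = PE a b t -> y = PE a b s -> z <= Rabs (t - s)) -> z <= rdist T x y.
Proof.
  intros H1 H2. unfold rdist.
  destruct x as [a|a b t], y as [c|c d s]; try (apply via_glb; auto).
  destruct excluded_middle_informative as [[<- <-]|]; [|apply via_glb; auto].
  apply Rmin_glb; [eapply H2; eauto|apply via_glb; auto].
Qed.

End Cells.

Section Fullness.
Variables (T : Tree) (v : tV T) (T' : Tree) (w : tV T').
Variable m : mor (eta T v) (eta T' w).
Hypothesis Hm : IsMor m.
Notation Phi := (mPhi m).
Open Scope nat_scope.

(* a level at which the square between levels [n + 1] and [n] of [m] commutes *)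
Definition square_level (n : nat) : nat :=
  proj1_sig (constructive_indefinite_description _ (Hm n (S n) (Nat.lt_succ_diag_r n))).

Lemma square_level_spec n : Phi n <= square_level n /\ Phi (S n) <= square_level n /\
  forall (x : tX (eta T v) (square_level n)) y1 y2 z,
    bond (eta T v) (Phi n) (square_level n) x y1 ->
    bond (eta T v) (Phi (S n)) (square_level n) x y2 ->
    bond (eta T' w) n (S n) (mf m (S n) y2) z -> mf m n y1 = z.
Proof.
  exact (proj2_sig (constructive_indefinite_description _ (Hm n (S n) (Nat.lt_succ_diag_r n)))).
Qed.

Fixpoint Psi (n : nat) : nat :=
  match n with
  | O => Phi O
  | S n' => Nat.max (S (Psi n')) (Nat.max (square_level n') (Phi (S n')))
  end.

Lemma Psi_ge_Phi n : Phi n <= Psi n.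
Proof. destruct n; cbn [Psi]; lia. Qed.

Lemma Psi_lt n : Psi n < Psi (S n).
Proof. cbn [Psi]; lia. Qed.

Lemma Psi_ge_square n : square_level n <= Psi (S n).
Proof. cbn [Psi]; lia. Qed.

Lemma Psi_mono n n' : n <= n' -> Psi n <= Psi n'.
Proof. induction 1; auto. pose proof (Psi_lt m0); lia. Qed.

Lemma Psi_ge_id n : n <= Psi n.
Proof. induction n; [lia|]. pose proof (Psi_lt n); lia. Qed.

Definition descend n (c : tX (eta T v) (Psi n)) : tX (eta T v) (Phi n) :=
  proj1_sig (constructive_indefinite_description _
    (bond_exists (eta T v) (Phi n) (Psi n) c (Psi_ge_Phi n))).

Lemma descend_spec n c : bond (eta T v) (Phi n) (Psi n) c (descend n c).
Proof.
  exact (proj2_sig (constructive_indefinite_description _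
    (bond_exists (eta T v) (Phi n) (Psi n) c (Psi_ge_Phi n)))).
Qed.

Definition vertex_image n (c : tX (eta T v) (Psi n)) : tX (eta T' w) n := mf m n (descend n c).

Lemma vertex_image_parent n (c : tX (eta T v) (Psi (S n))) (c' : tX (eta T v) (Psi n)) :
  anc T v (proj1_sig c') (proj1_sig c) ->
  proj1_sig (vertex_image n c') = parv T' w (proj1_sig (vertex_image (S n) c)).
Proof.
  intros Hcc. destruct (square_level_spec n) as [H1 [H2 H3]].
  destruct (bond_exists (eta T v) (square_level n) (Psi (S n)) c (Psi_ge_square n)) as [x Bx].
  destruct (bond_exists _ (Phi n) (square_level n) x H1) as [y1 B1].
  destruct (bond_exists _ (Phi (S n)) (square_level n) x H2) as [y2 B2].
  specialize (H3 x y1 y2 _ B1 B2 (bond_one (eta T' w) n (mf m (S n) y2))).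
  assert (E2 : descend (S n) c = y2).
  { eapply bond_fun; [apply descend_spec|]. eapply bond_trans; eauto. }
  assert (E1 : descend n c' = y1).
  { eapply bond_fun; [|eapply bond_trans; [exact B1|exact Bx]].
    eapply bond_trans; [apply descend_spec|]. apply anc_bond; auto. apply Nat.lt_le_incl, Psi_lt. }
  unfold vertex_image. rewrite E1, E2, H3. apply parent_val.
Qed.

Definition band (L : nat) : nat := greatest_upto (fun n => Psi n < L) L.

Lemma band_spec L : Psi 0 < L -> Psi (band L) < L /\ L <= Psi (S (band L)).
Proof.
  intros H0.
  assert (P : Psi (band L) < L) by (apply (greatest_upto_spec (fun n => Psi n < L)); auto).
  split; auto. destruct (le_lt_dec L (Psi (S (band L)))) as [Hl|Hl]; auto. exfalso.
  pose proof (Psi_ge_id (S (band L))).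
  assert (S (band L) <= band L) by (apply (greatest_upto_max (fun n => Psi n < L)); lia). lia.
Qed.

Lemma band_ge n L : Psi n < L -> n <= band L.
Proof. intros H. pose proof (Psi_ge_id n). apply (greatest_upto_max (fun n => Psi n < L)); lia. Qed.

Lemma band_unique n L : Psi n < L -> L <= Psi (S n) -> band L = n.
Proof.
  intros H1 H2. assert (H0 : Psi 0 < L) by (pose proof (Psi_mono 0 n ltac:(lia)); lia).
  destruct (band_spec L H0) as [A1 A2]. pose proof (band_ge n L H1).
  destruct (Nat.eq_dec (band L) n); auto.
  pose proof (Psi_mono (S n) (band L) ltac:(lia)). lia.
Qed.

Definition ancestor_Cset k a (H : S k <= depth T v a) : Cset T v k :=
  exist _ (ancestor T v (S k) a) (gdistR_depth T v _ _ (depth_ancestor T v _ _ H)).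

(* a vertex of depth [L] in [(Psi n, Psi (n + 1)]] goes to the image of its ancestor of depth
   [Psi n + 1]; vertices of depth [<= Psi 0] go to the root *)
Definition vertex_map (a : tV T) : tV T' :=
  match le_dec (S (Psi (band (depth T v a)))) (depth T v a) with
  | left H => if le_lt_dec (depth T v a) (Psi 0) then w
              else proj1_sig (vertex_image _ (ancestor_Cset _ a H))
  | right _ => w
  end.

Lemma vertex_map_shallow a : depth T v a <= Psi 0 -> vertex_map a = w.
Proof. intros H. unfold vertex_map. destruct le_dec; auto. destruct le_lt_dec; auto; lia. Qed.

Lemma vertex_map_spec a n (c : Cset T v (Psi n)) : Psi 0 < depth T v a -> band (depth T v a) = n ->
  proj1_sig c = ancestor T v (S (Psi n)) a -> vertex_map a = proj1_sig (vertex_image n c).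
Proof.
  intros H0 Hi Hc. subst n. unfold vertex_map. destruct le_dec as [H|H].
  - destruct le_lt_dec; [lia|]. do 2 f_equal. apply Cset_eq. simpl. auto.
  - exfalso. destruct (band_spec _ H0). lia.
Qed.

Lemma ancestor_Cset_exists k a : S k <= depth T v a ->
  exists c : Cset T v k, proj1_sig c = ancestor T v (S k) a.
Proof. intros H. exists (ancestor_Cset k a H). reflexivity. Qed.

Lemma depth_vertex_map a :
  Psi 0 < depth T v a -> depth T' w (vertex_map a) = S (band (depth T v a)).
Proof.
  intros H0. destruct (band_spec _ H0) as [A1 A2].
  destruct (ancestor_Cset_exists (Psi (band (depth T v a))) a) as [c Hc]; [lia|].
  rewrite (vertex_map_spec a _ c H0 eq_refl Hc). apply Cset_depth.
Qed.

Lemma vertex_map_root : vertex_map v = w.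
Proof. apply vertex_map_shallow. rewrite depth_root. lia. Qed.

Lemma vertex_map_edge a b : 0 < depth T v b -> a = parv T v b ->
  vertex_map a = vertex_map b \/
  (vertex_map a = parv T' w (vertex_map b) /\
   depth T' w (vertex_map b) = S (depth T' w (vertex_map a))).
Proof.
  intros Hb Ea. assert (La : depth T v a = depth T v b - 1) by (rewrite Ea; apply depth_parv).
  destruct (le_lt_dec (depth T v b) (Psi 0)) as [L1|L1].
  { left. rewrite !vertex_map_shallow; auto; lia. }
  destruct (le_lt_dec (depth T v a) (Psi 0)) as [L2|L2].
  { right. rewrite (vertex_map_shallow a L2).
    assert (Ei : band (depth T v b) = 0) by (apply band_unique; [lia|pose proof (Psi_lt 0); lia]).
    pose proof (depth_vertex_map b L1) as Hl. rewrite Ei in Hl.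
    split; [|rewrite Hl, depth_root; auto].
    symmetry. apply depth_eq0. rewrite depth_parv. lia. }
  set (n := band (depth T v a)). destruct (band_spec _ L2) as [A1 A2]. fold n in A1, A2.
  destruct (ancestor_Cset_exists (Psi n) a) as [ca Hca]; [lia|].
  assert (Fa : vertex_map a = proj1_sig (vertex_image n ca)) by (apply vertex_map_spec; auto).
  destruct (le_lt_dec (depth T v b) (Psi (S n))) as [L3|L3].
  - left. rewrite Fa. symmetry. apply vertex_map_spec; auto; [apply band_unique; lia|].
    rewrite Hca, Ea, parv_as_ancestor by lia. apply ancestor_ancestor; lia.
  - right. assert (Eb : band (depth T v b) = S n).
    { apply band_unique; [lia|]. pose proof (Psi_lt (S n)). lia. }
    destruct (ancestor_Cset_exists (Psi (S n)) b) as [cb Hcb]; [lia|].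
    assert (Fb : vertex_map b = proj1_sig (vertex_image (S n) cb)) by (apply vertex_map_spec; auto).
    assert (Hb' : proj1_sig cb = b).
    { rewrite Hcb. replace (S (Psi (S n))) with (depth T v b) by lia. apply ancestor_depth. }
    rewrite Fa, Fb. split; [|rewrite !Cset_depth; auto].
    apply vertex_image_parent. rewrite Hb', Hca.
    eapply anc_trans; [apply anc_ancestor; lia|]. rewrite Ea. apply anc_parv.
Qed.

Lemma vertex_map_adj a b :
  tadj T a b -> vertex_map a = vertex_map b \/ tadj T' (vertex_map a) (vertex_map b).
Proof.
  intros H. destruct (adj_cases T v a b H) as [[E1 E2]|[E1 E2]].
  - destruct (vertex_map_edge a b ltac:(lia) E2) as [E|[E L]]; [auto|right].
    rewrite E. apply tadj_sym, parv_spec. lia.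
  - destruct (vertex_map_edge b a ltac:(lia) E2) as [E|[E L]]; [auto|right].
    rewrite E. apply parv_spec. lia.
Qed.

Lemma gdist_vertex_map a c : gdist T' (vertex_map a) (vertex_map c) <= gdist T a c.
Proof.
  assert (G : forall n, walk (tadj T) a c n ->
            exists n', n' <= n /\ walk (tadj T') (vertex_map a) (vertex_map c) n').
  { intros n W; induction W as [|b c n W IH Hbc]; [exists 0; split; [lia|constructor]|].
    destruct IH as [n' [Hn' W']]. destruct (vertex_map_adj b c Hbc) as [E|H].
    - rewrite <- E. exists n'; split; [lia|auto].
    - exists (S n'); split; [lia|]. eapply walkS; eauto. }
  destruct (G _ (gdist_walk T a c)) as [n' [Hn W]].
  pose proof (gdist_le_walk T' _ _ _ W). lia.
Qed.

Lemma vertex_map_deep n a : S (Psi n) <= depth T v a -> S n <= depth T' w (vertex_map a).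
Proof.
  intros H. assert (H0 : Psi 0 < depth T v a) by (pose proof (Psi_mono 0 n ltac:(lia)); lia).
  rewrite depth_vertex_map by auto. pose proof (band_ge n (depth T v a) ltac:(lia)). lia.
Qed.

Lemma vertex_image_anc d j (cj : Cset T v (Psi j)) (cn : Cset T v (Psi (d + j))) :
  anc T v (proj1_sig cj) (proj1_sig cn) ->
  anc T' w (proj1_sig (vertex_image j cj)) (proj1_sig (vertex_image (d + j) cn)).
Proof.
  revert cn. induction d as [|d IH]; intros cn H.
  - simpl in cn, H |- *. replace cj with cn; [apply anc_refl|].
    apply Cset_eq, (anc_unique T v _ _ (proj1_sig cn)); [apply anc_refl|auto|].
    rewrite !Cset_depth; auto.
  - assert (Hl : S (Psi (d + j)) <= depth T v (proj1_sig cn)).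
    { rewrite Cset_depth. pose proof (Psi_lt (d + j)). change (S d + j) with (S (d + j)). lia. }
    set (cm := ancestor_Cset _ _ Hl).
    assert (Hm1 : anc T v (proj1_sig cm) (proj1_sig cn)) by (apply anc_ancestor; auto).
    assert (Hm2 : anc T v (proj1_sig cj) (proj1_sig cm)).
    { apply (anc_of_common T v _ _ (proj1_sig cn)); auto. rewrite !Cset_depth.
      pose proof (Psi_mono j (d + j) ltac:(lia)). lia. }
    eapply anc_trans; [apply IH; eauto|].
    change (S d + j) with (S (d + j)). rewrite (vertex_image_parent (d + j) cn cm Hm1).
    apply anc_parv.
Qed.

Lemma vertex_map_anc k (c : Cset T v (Psi k)) a : anc T v (proj1_sig c) a ->
  anc T' w (proj1_sig (vertex_image k c)) (vertex_map a).
Proof.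
  intros H. pose proof (anc_depth T v _ _ H) as L. rewrite Cset_depth in L.
  assert (H0 : Psi 0 < depth T v a) by (pose proof (Psi_mono 0 k ltac:(lia)); lia).
  set (n := band (depth T v a)).
  pose proof (band_ge k (depth T v a) ltac:(lia)) as Hkn. fold n in Hkn.
  destruct (band_spec _ H0) as [A1 A2]. fold n in A1, A2.
  destruct (ancestor_Cset_exists (Psi ((n - k) + k)) a) as [cn Hcn].
  { replace ((n - k) + k) with n by lia. lia. }
  rewrite (vertex_map_spec a _ cn H0) by (auto; lia).
  apply vertex_image_anc, (anc_of_common T v _ _ a); auto.
  - rewrite Hcn. apply anc_ancestor. replace ((n - k) + k) with n by lia. lia.
  - rewrite !Cset_depth. pose proof (Psi_mono k ((n - k) + k) ltac:(lia)). lia.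
Qed.

Open Scope R_scope.

Definition realize (x : raw (tV T)) : raw (tV T') :=
  match x with
  | PV a => PV (vertex_map a)
  | PE a b t => if excluded_middle_informative (vertex_map a = vertex_map b) then PV (vertex_map a)
                else PE (vertex_map a) (vertex_map b) t
  end.

Lemma realize_valid x : valid T v x -> valid T' w (realize x).
Proof.
  intros Vx. destruct x as [a|a b t]; simpl; [exact I|].
  destruct excluded_middle_informative as [E|E]; [exact I|].
  apply valid_edge in Vx as [Hab [Eb [Ea Ht]]].
  destruct (vertex_map_edge a b ltac:(lia) Ea) as [E'|[E' L]]; [contradiction|].
  split; [|split; [|auto]].
  - rewrite E'. apply tadj_sym, parv_spec. lia.
  - exists (depth T' w (vertex_map a)). split; [apply depth_spec|]. rewrite <- L. apply depth_spec.
Qed.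

Definition realizeP (x : pt T v) : pt T' w :=
  exist _ (realize (proj1_sig x)) (realize_valid _ (proj2_sig x)).

Lemma realize_ends x p : valid T v x -> cell_end T x p ->
  exists p', cell_end T' (realize x) p' /\ fst p' = vertex_map (fst p) /\ 0 <= snd p' <= snd p.
Proof.
  intros Vx Hp. destruct x as [a|a b t]; unfold cell_end in *; simpl in *.
  - exists (vertex_map a, 0).
    destruct Hp as [->| ->]; simpl; (split; [left; reflexivity|split; [reflexivity|lra]]).
  - apply valid_edge in Vx as [_ [_ [_ Ht]]].
    destruct excluded_middle_informative as [E|E]; simpl.
    + exists (vertex_map a, 0). split; [left; reflexivity|].
      destruct Hp as [->| ->]; simpl; (split; [auto|lra]).
    + destruct Hp as [->| ->].
      * exists (vertex_map a, t). simpl. split; [left; reflexivity|split; [reflexivity|lra]].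
      * exists (vertex_map b, 1 - t). simpl. split; [right; reflexivity|split; [reflexivity|lra]].
Qed.

Lemma realize_lipschitz x y : valid T v x -> valid T v y ->
  rdist T' (realize x) (realize y) <= rdist T x y.
Proof.
  intros Vx Vy. apply rdist_glb.
  - intros p q Hp Hq.
    destruct (realize_ends x p Vx Hp) as [p' [Hp' [E1 [S1 S2]]]].
    destruct (realize_ends y q Vy Hq) as [q' [Hq' [E2 [S3 S4]]]].
    eapply Rle_trans; [apply rdist_le_via|]. eapply Rle_trans; [apply via_le_leg; eauto|].
    unfold leg. rewrite E1, E2.
    pose proof (le_INR _ _ (gdist_vertex_map (fst p) (fst q))). lra.
  - intros a b t s -> ->. simpl. destruct excluded_middle_informative as [E|E].
    + unfold rdist, via, leg; simpl. rewrite gdist_refl. simpl.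
      pose proof (Rabs_pos (t - s)). rmin_solve.
    + unfold rdist. destruct excluded_middle_informative as [_|C]; [apply Rmin_l|].
      exfalso; apply C; auto.
Qed.

Lemma realize_deep n x : valid T v x -> INR (S (Psi n)) <= height T v x ->
  INR (S n) <= height T' w (realize x).
Proof.
  intros Vx H. rewrite S_INR in H |- *. destruct x as [a|a b t]; simpl in *.
  - assert (L : (S (Psi n) <= depth T v a)%nat) by (apply INR_le; rewrite S_INR; lra).
    pose proof (le_INR _ _ (vertex_map_deep n a L)). rewrite S_INR in H0. lra.
  - apply valid_edge in Vx as [_ [_ [_ Ht]]].
    assert (L : (S (Psi n) <= depth T v a)%nat)
      by (eapply INR_frac_le; [|rewrite S_INR; eauto]; lra).
    pose proof (le_INR _ _ (vertex_map_deep n a L)). rewrite S_INR in H0.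
    destruct excluded_middle_informative; simpl; lra.
Qed.

Lemma realize_height_bound n (x : pt T v) : height T' w (realize (proj1_sig x)) < INR (S n) ->
  height T v (proj1_sig x) < INR (S (Psi n)).
Proof.
  intros Hx. destruct (Rlt_le_dec (height T v (proj1_sig x)) (INR (S (Psi n)))) as [L|L]; auto.
  apply realize_deep in L; [lra|apply proj2_sig].
Qed.

Lemma eta_full : exists f, RCP T v T' w f /\ exists m', IsEtaMor T v T' w f m' /\ mor_eq m' m.
Proof.
  exists realizeP. split; [split; [|split]|].
  - intros x eps He. exists eps. split; auto. intros y Hy.
    eapply Rle_lt_trans; [apply realize_lipschitz; apply proj2_sig|exact Hy].
  - intros P [c0 [r0 Hc0]].
    destruct (exists_nat_gt (height T' w (proj1_sig c0) + r0)) as [N0 HN0].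
    exists (vpt T v v), (INR (S (Psi N0))). intros x Hx. rewrite pdist_root.
    apply realize_height_bound. apply Hc0 in Hx. rewrite pdist_tdist in Hx.
    pose proof (tdist_height T' w (proj1_sig c0) (proj1_sig (realizeP x))).
    pose proof (le_INR _ _ (Nat.le_succ_diag_r N0)). simpl proj1_sig in *. rmin_solve.
  - simpl. rewrite vertex_map_root. reflexivity.
  - exists {| mPhi := Psi; mf := vertex_image |}. split; [split; [|split]|].
    + exact Psi_lt.
    + intros k x Hx. rewrite pdist_root in *. apply realize_height_bound. exact Hx.
    + intros k c x Hin. simpl. destruct (proj1_sig x) as [a|a b t]; simpl in *.
      * apply vertex_map_anc; auto.
      * destruct excluded_middle_informative; simpl; apply vertex_map_anc; auto.
    + intros n. exists (Psi n). split; [simpl; lia|split; [apply Psi_ge_Phi|]].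
      intros x y1 y2 B1 B2. simpl in *. apply bond_refl_inv in B1. subst y1.
      unfold vertex_image. f_equal. eapply bond_fun; [apply descend_spec|exact B2].
Qed.

End Fullness.

Theorem theorem6p2 :
  (forall (T : Tree) (v : tV T) (T' : Tree) (w : tV T') (f : pt T v -> pt T' w),
      RCP T v T' w f -> exists m, IsEtaMor T v T' w f m /\ IsMor m) /\
  (forall (T : Tree) (v : tV T) (T' : Tree) (w : tV T') (f g : pt T v -> pt T' w) m m',
      RCP T v T' w f -> RCP T v T' w g -> rmp_homotopic T v T' w f g ->
      IsEtaMor T v T' w f m -> IsEtaMor T v T' w g m' -> mor_eq m m') /\
  (forall (T : Tree) (v : tV T) m,
      IsEtaMor T v T v (fun x => x) m -> mor_eq m (mor_id (eta T v))) /\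
  (forall (T1 : Tree) (v1 : tV T1) (T2 : Tree) (v2 : tV T2) (T3 : Tree) (v3 : tV T3)
          (f : pt T1 v1 -> pt T2 v2) (g : pt T2 v2 -> pt T3 v3) m1 m2 m3,
      RCP T1 v1 T2 v2 f -> RCP T2 v2 T3 v3 g ->
      IsEtaMor T1 v1 T2 v2 f m1 -> IsEtaMor T2 v2 T3 v3 g m2 ->
      IsEtaMor T1 v1 T3 v3 (fun x => g (f x)) m3 ->
      mor_eq m3 (mor_comp m1 m2)) /\
  (forall (T : Tree) (v : tV T) (T' : Tree) (w : tV T') (m : mor (eta T v) (eta T' w)),
      IsMor m -> exists f, RCP T v T' w f /\ exists m', IsEtaMor T v T' w f m' /\ mor_eq m' m) /\
  (forall (T : Tree) (v : tV T) (T' : Tree) (w : tV T') (f g : pt T v -> pt T' w) m m',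
      RCP T v T' w f -> RCP T v T' w g ->
      IsEtaMor T v T' w f m -> IsEtaMor T v T' w g m' -> mor_eq m m' ->
      rmp_homotopic T v T' w f g) /\
  (forall A : tower, exists (T : Tree) (v : tV T), tower_iso A (eta T v)).
Proof.
  split; [exact eta_exists|].
  split; [intros T v T' w f g m m' _ _; exact (eta_homotopy_invariant T v T' w f g m m')|].
  split; [exact eta_id|].
  split; [intros T1 v1 T2 v2 T3 v3 f g m1 m2 m3 _ _;
          exact (eta_comp T1 v1 T2 v2 T3 v3 f g m1 m2 m3)|].
  split; [exact eta_full|].
  split; [exact eta_faithful|].
  exact eta_essentially_surjective.
Qed.
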